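(* Let $R>0$ and $q>0$ be fixed, and for $M\ge2$ let $\tau_M=\frac{R}{q\ln M}$. Define $$\mathcal{E}(\tau)=\mathbb{E}\left[\frac{e^{U_1/\sqrt{\tau}}}{e^{U_1/\sqrt\tau}+e^{-1/\tau}\sum_{j=2}^Me^{U_j/\sqrt\tau}}\right],$$ with $U_1,\dots,U_M$ i.i.d. $\mathcal{N}(0,1)$. Then $\lim_{M\to\infty}\mathcal{E}(\tau_M)=1$ if $q>2R$ and $\lim_{M\to\infty}\mathcal{E}(\tau_M)=0$ if $q<2R$. (In the spatially coupled state evolution, $q=\frac{1}{L_R}\sum_{r=1}^{L_R}W_{rc}/\phi^t_r$.)
   Context: In spatially coupled SPARC state evolution, $\tau^t_c=\frac{R}{\ln M}\big[\frac{1}{L_R}\sum_r\frac{W_{rc}}{\phi^t_r}\big]^{-1}$ for a base matrix $W\in\mathbb{R}^{L_R\times L_C}$ with nonnegative entries and positive numbers $\phi^t_r$; $R$ is the rate in nats. *)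

From Stdlib Require Import Reals Lra Lia Arith ClassicalEpsilon.
Open Scope R_scope.

Definition RI (f : R -> R) (a b : R) : R :=
  match excluded_middle_informative (inhabited (Riemann_integrable f a b)) with
  | left H =>
      let pr := proj1_sig (constructive_indefinite_description
                  (fun _ : Riemann_integrable f a b => True)
                  (match H with inhabits p => ex_intro _ p I end)) in
      RiemannInt pr
  | right _ => 0
  end.

(* Improper integral over the whole real line:
   lim_{n -> oo} of int_{-n}^{n} f  (0 if the limit does not exist). *)
Definition full_int (f : R -> R) : R :=
  match excluded_middle_informative
          (exists l, Un_cv (fun n => RI f (- INR n) (INR n)) l) with
  | left H => proj1_sig (constructive_indefinite_description _ H)
  | right _ => 0
  end.

Definition gauss_density (x : R) : R := exp (- x ^ 2 / 2) / sqrt (2 * PI).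

(* gexp n f = E[ f(U) ] where U_0, ..., U_{n-1} are i.i.d. N(0,1)
   (coordinates i >= n of U are set to 0), computed as an iterated integral. *)
Fixpoint gexp (n : nat) (f : (nat -> R) -> R) : R :=
  match n with
  | O => f (fun _ => 0)
  | S k => full_int (fun x =>
             gauss_density x *
             gexp k (fun u => f (fun i => if Nat.eqb i k then x else u i)))
  end.

(* The integrand, with U_1, ..., U_M represented as u 0, ..., u (M-1):
   e^{U_1/sqrt tau} / (e^{U_1/sqrt tau} + e^{-1/tau} sum_{j=2}^M e^{U_j/sqrt tau}).
   Intended for M >= 2 (the sum sum_f_R0 _ (M-2) has M-1 terms). *)
Definition sparc_integrand (M : nat) (tau : R) (u : nat -> R) : R :=
  exp (u 0%nat / sqrt tau) /
  (exp (u 0%nat / sqrt tau) +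
   exp (- 1 / tau) * sum_f_R0 (fun j => exp (u (S j) / sqrt tau)) (M - 2)).

Definition calE (M : nat) (tau : R) : R := gexp M (sparc_integrand M tau).

Definition tauM (Rate q : R) (M : nat) : R := Rate / (q * ln (INR M)).

(* Write [a = 1 / sqrt tau_M], so that [a^2 = (q / R) ln M], and read the integrand as the
   softmax weight of [U_1] against [M - 1] competitors handicapped by [exp (- a^2)].
   If [q > 2R], the weight is close to 1 unless [U_1 < - d a] or some [U_j > (1 - d) a];
   by Chernoff bounds these have probabilities [M^(-d^2 q / 2R)] and [M^(1 - (1-d)^2 q / 2R)],
   both vanishing for small [d > 0].  If [q < 2R], the weight is small unless [U_1 >= t] or all
   [U_j <= c] (the remaining case costs [exp (- a (c - t) + a^2)]); with [t = ep a],
   [c = gam a], [c^2 < 2 ln M] and [c - t > a], all three terms vanish, the middle one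
   because [(1 - P(U > c))^(M - 1) <= exp (- (M - 1) P(U > c))] and [M P(U > c) -> oo].
   The expectation over [M] Gaussians is an iterated improper integral; it behaves as a
   normalised positive linear functional on integrands that are bounded and Lipschitz in
   each coordinate, which is all the argument uses, and the Gaussian tail estimate needed
   for the improper integrals comes from Euler's evaluation of the Gaussian integral. *)

From Stdlib Require Import Reals Lra Lia Classical ClassicalEpsilon FunctionalExtensionality.
From Coquelicot Require Import Coquelicot.
Open Scope R_scope.

(* Coquelicot states these for normed modules, writing [scal] for the product; the
   instances below rewrite plain real expressions. *)

Lemma ex_RInt_continuous_R (f : R -> R) a b :
  (forall z, Rmin a b <= z <= Rmax a b -> continuous f z) -> ex_RInt f a b.
Proof. exact (ex_RInt_continuous (V := R_CompleteNormedModule) f a b). Qed.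

Lemma continuous_of_ex_derive (f : R -> R) x : ex_derive f x -> continuous f x.
Proof. exact (ex_derive_continuous (K := R_AbsRing) (V := R_NormedModule) f x). Qed.

Lemma RInt_scal_R (f : R -> R) a b l :
  ex_RInt f a b -> RInt (fun x => l * f x) a b = l * RInt f a b.
Proof. exact (RInt_scal f a b l). Qed.

Lemma RInt_comp_lin_R (f : R -> R) u v a b :
  ex_RInt f (u * a + v) (u * b + v) ->
  RInt (fun y => u * f (u * y + v)) a b = RInt f (u * a + v) (u * b + v).
Proof. exact (RInt_comp_lin f u v a b). Qed.

Lemma RInt_plus_R (f g : R -> R) a b : ex_RInt f a b -> ex_RInt g a b ->
  RInt (fun x => f x + g x) a b = RInt f a b + RInt g a b.
Proof. exact (RInt_plus f g a b). Qed.

Lemma RInt_Chasles_R (f : R -> R) a b c : ex_RInt f a b -> ex_RInt f b c ->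
  RInt f a b + RInt f b c = RInt f a c.
Proof. exact (RInt_Chasles f a b c). Qed.

Lemma RInt_swap_R (f : R -> R) a b : ex_RInt f b a -> RInt f a b = - RInt f b a.
Proof. intro H. rewrite <- (opp_RInt_swap f b a H). reflexivity. Qed.

Lemma RInt_const_R a b c : RInt (fun _ => c) a b = (b - a) * c.
Proof. exact (RInt_const a b c). Qed.

Lemma ex_RInt_const_R (a b c : R) : ex_RInt (fun _ => c) a b.
Proof. apply ex_RInt_continuous_R; intros; apply continuous_const. Qed.

Lemma RInt_le_const_R (f : R -> R) a b c : a <= b -> ex_RInt f a b ->
  (forall x, a < x < b -> f x <= c) -> RInt f a b <= (b - a) * c.
Proof. intros. rewrite <- RInt_const_R. apply RInt_le; auto using ex_RInt_const_R. Qed.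

Lemma RInt_ge_const_R (f : R -> R) a b c : a <= b -> ex_RInt f a b ->
  (forall x, a < x < b -> c <= f x) -> (b - a) * c <= RInt f a b.
Proof. intros. rewrite <- RInt_const_R. apply RInt_le; auto using ex_RInt_const_R. Qed.

Lemma RInt_ge0_R (f : R -> R) a b : a <= b -> ex_RInt f a b ->
  (forall x, a < x < b -> 0 <= f x) -> 0 <= RInt f a b.
Proof.
  intros. replace 0 with ((b - a) * 0) by ring. apply RInt_ge_const_R; auto.
Qed.

Lemma exp_le x y : x <= y -> exp x <= exp y.
Proof. intros [H|H]; [left; apply exp_increasing, H | subst; lra]. Qed.

(* Coquelicot states its results in [R_AbsRing]; [ring] needs the equation at type [R]. *)
Ltac as_R_eq := match goal with |- ?a = ?b => change (@eq R a b) end.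

(** * The Gaussian mass of [[-N, N]] *)

Definition gauss_kernel (t : R) := exp (- (t * t)).
Definition erf_prim (x : R) := RInt gauss_kernel 0 x.
Definition euler_kernel (x t : R) := exp (- (x * x) * (1 + t * t)) / (1 + t * t).
Definition euler_aux (x : R) := RInt (euler_kernel x) 0 1.

Lemma one_plus_sqr_neq0 t : 1 + t * t <> 0.
Proof. nra. Qed.

Lemma continuous_gauss_kernel x : continuous gauss_kernel x.
Proof. apply continuous_of_ex_derive; unfold gauss_kernel; auto_derive; auto. Qed.

Lemma ex_RInt_gauss_kernel a b : ex_RInt gauss_kernel a b.
Proof. apply ex_RInt_continuous_R; intros; apply continuous_gauss_kernel. Qed.

Lemma ex_RInt_euler_kernel x : ex_RInt (euler_kernel x) 0 1.
Proof.
  apply ex_RInt_continuous_R; intros; apply continuous_of_ex_derive.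
  unfold euler_kernel; auto_derive; apply one_plus_sqr_neq0.
Qed.

Lemma is_derive_erf_prim x : is_derive erf_prim x (gauss_kernel x).
Proof.
  apply is_derive_RInt with (a := 0).
  - apply filter_forall; intros; apply RInt_correct, ex_RInt_gauss_kernel.
  - apply continuous_gauss_kernel.
Qed.

Lemma is_derive_euler_kernel x t :
  is_derive (fun z => euler_kernel z t) x (-2 * x * exp (- (x * x) * (1 + t * t))).
Proof. unfold euler_kernel. auto_derive. exact I. field. apply one_plus_sqr_neq0. Qed.

Lemma continuity_2d_pt_exp f x y :
  continuity_2d_pt f x y -> continuity_2d_pt (fun u v => exp (f u v)) x y.
Proof.
  intros; apply continuity_1d_2d_pt_comp; auto.
  apply derivable_continuous_pt, derivable_pt_exp.
Qed.

Lemma is_derive_euler_aux x : is_derive euler_aux x (-2 * gauss_kernel x * erf_prim x).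
Proof.
  assert (H : is_derive euler_aux x (RInt (fun t => Derive (fun z => euler_kernel z t) x) 0 1)).
  { apply (is_derive_RInt_param euler_kernel 0 1 x).
    - apply filter_forall; intros y t _. eexists; apply is_derive_euler_kernel.
    - intros t _.
      apply continuity_2d_pt_ext with (f := fun u v => -2 * u * exp (- (u * u) * (1 + v * v))).
      + intros; symmetry; apply is_derive_unique, is_derive_euler_kernel.
      + repeat first [ apply continuity_2d_pt_mult | apply continuity_2d_pt_plus
                     | apply continuity_2d_pt_opp | apply continuity_2d_pt_exp
                     | apply continuity_2d_pt_const | apply continuity_2d_pt_id1
                     | apply continuity_2d_pt_id2 ].
    - apply filter_forall; intros y; apply ex_RInt_euler_kernel. }
  replace (-2 * gauss_kernel x * erf_prim x) with
    (RInt (fun t => Derive (fun z => euler_kernel z t) x) 0 1); auto.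
  (* substituting [s = x t] turns the x-derivative of the kernel into [gauss_kernel] *)
  rewrite (RInt_ext _ (fun t => (-2 * gauss_kernel x) * (x * gauss_kernel (x * t + 0)))).
  2:{ intros t _. erewrite is_derive_unique; [|apply is_derive_euler_kernel].
      unfold gauss_kernel. replace (x * t + 0) with (x * t) by ring.
      replace (- (x * x) * (1 + t * t)) with (- (x * x) + - (x * t * (x * t))) by ring.
      rewrite exp_plus. as_R_eq; ring. }
  rewrite RInt_scal_R.
  2:{ apply ex_RInt_continuous_R; intros; apply continuous_of_ex_derive;
      unfold gauss_kernel; auto_derive; auto. }
  rewrite RInt_comp_lin_R by apply ex_RInt_gauss_kernel.
  unfold erf_prim. rewrite Rmult_0_r, Rmult_1_r, !Rplus_0_r.
  reflexivity.
Qed.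

Lemma euler_aux_0 : euler_aux 0 = PI / 4.
Proof.
  unfold euler_aux. rewrite (RInt_ext _ (fun t => / (1 + t ^ 2))).
  2:{ intros t _. unfold euler_kernel. replace (- (0 * 0) * (1 + t * t)) with 0 by ring.
      rewrite exp_0. as_R_eq; field. nra. }
  rewrite <- atan_1. replace (atan 1) with (atan 1 - atan 0) by (rewrite atan_0; ring).
  apply is_RInt_unique, (is_RInt_derive (V := R_CompleteNormedModule) atan).
  - intros; apply is_derive_Reals, derivable_pt_lim_atan.
  - intros; apply continuous_of_ex_derive; auto_derive; nra.
Qed.

(* Euler's proof of the Gaussian integral: the derivative of the left side vanishes. *)
Lemma erf_prim_sqr_plus_euler_aux x : erf_prim x * erf_prim x + euler_aux x = PI / 4.
Proof.
  set (h x := erf_prim x * erf_prim x + euler_aux x).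
  assert (Hd : forall x, is_derive h x 0).
  { intro y. unfold h.
    replace 0 with (gauss_kernel y * erf_prim y + erf_prim y * gauss_kernel y
                    + (-2 * gauss_kernel y * erf_prim y)) by ring.
    apply (is_derive_plus (K := R_AbsRing) (V := R_NormedModule)).
    - apply (is_derive_mult (K := R_AbsRing)); try apply is_derive_erf_prim.
      intros; apply Rmult_comm.
    - apply is_derive_euler_aux. }
  destruct (MVT_gen h 0 x (fun _ => 0)) as [c [_ Hc]]; auto.
  - intros; apply derivable_continuous_pt. exists 0. apply is_derive_Reals, Hd.
  - assert (h 0 = PI / 4).
    { assert (H0 : erf_prim 0 = 0) by exact (RInt_point 0 gauss_kernel).
      unfold h. rewrite H0, euler_aux_0. ring. }
    unfold h in *. lra.
Qed.

Lemma euler_aux_bounds x : 0 <= euler_aux x <= exp (- (x * x)).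
Proof.
  unfold euler_aux. split.
  - apply RInt_ge0_R; [lra | apply ex_RInt_euler_kernel |].
    intros t _. unfold euler_kernel. apply Rle_mult_inv_pos; [apply Rlt_le, exp_pos | nra].
  - replace (exp (- (x * x))) with ((1 - 0) * exp (- (x * x))) by ring.
    apply RInt_le_const_R; [lra | apply ex_RInt_euler_kernel |].
    intros t Ht. unfold euler_kernel.
    apply Rle_trans with (exp (- (x * x) * (1 + t * t))).
    + unfold Rdiv. rewrite <- (Rmult_1_r (exp _)) at 2.
      apply Rmult_le_compat_l; [apply Rlt_le, exp_pos |].
      rewrite <- Rinv_1. apply Rinv_le_contravar; nra.
    + apply exp_le; nra.
Qed.

Lemma sqrt_PI_pos : 0 < sqrt PI.
Proof. apply sqrt_lt_R0, PI_RGT_0. Qed.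

Lemma sqrt_PI_sqr : sqrt PI * sqrt PI = PI.
Proof. apply sqrt_sqrt, Rlt_le, PI_RGT_0. Qed.

(* [sqrt PI / 2] is the full half-line integral of [gauss_kernel]; the remainder is
   controlled by [euler_aux]. *)
Lemma erf_prim_bounds a : 0 <= a ->
  0 <= erf_prim a <= sqrt PI / 2 /\
  sqrt PI / 2 - erf_prim a <= exp (- (a * a)) / (sqrt PI / 2).
Proof.
  intro Ha. assert (HP := sqrt_PI_pos). assert (HPP := sqrt_PI_sqr).
  assert (G0 : 0 <= erf_prim a).
  { apply RInt_ge0_R; auto using ex_RInt_gauss_kernel. intros; apply Rlt_le, exp_pos. }
  assert (Hh := erf_prim_sqr_plus_euler_aux a). destruct (euler_aux_bounds a) as [V1 V2].
  assert (Hs : sqrt PI / 2 * (sqrt PI / 2) = PI / 4) by nra.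
  set (s := sqrt PI / 2) in *. assert (0 < s) by (unfold s; lra).
  assert (erf_prim a <= s) by nra.
  split; [lra |].
  apply Rmult_le_reg_r with s; [lra |].
  unfold Rdiv. rewrite Rmult_assoc, Rinv_l by lra. nra.
Qed.

Lemma erf_prim_opp a : erf_prim (- a) = - erf_prim a.
Proof.
  unfold erf_prim. replace (- a) with (-1 * a + 0) by ring.
  replace 0 with (-1 * 0 + 0) at 1 by ring.
  rewrite <- RInt_comp_lin_R by apply ex_RInt_gauss_kernel.
  rewrite (RInt_ext _ (fun y => -1 * gauss_kernel y)).
  - rewrite RInt_scal_R by apply ex_RInt_gauss_kernel. as_R_eq; ring.
  - intros y _. unfold gauss_kernel. do 2 f_equal. ring.
Qed.

Lemma sqrt_2PI_pos : 0 < sqrt (2 * PI).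
Proof. apply sqrt_lt_R0. assert (H := PI_RGT_0). lra. Qed.

Lemma gauss_density_pos x : 0 < gauss_density x.
Proof. apply Rdiv_lt_0_compat; [apply exp_pos | apply sqrt_2PI_pos]. Qed.

Lemma continuous_gauss_density x : continuous gauss_density x.
Proof.
  apply continuous_of_ex_derive. unfold gauss_density. auto_derive.
  assert (H := sqrt_2PI_pos). lra.
Qed.

Lemma ex_RInt_gauss_density a b : ex_RInt gauss_density a b.
Proof. apply ex_RInt_continuous_R; intros; apply continuous_gauss_density. Qed.

Lemma gauss_density_eq x :
  gauss_density x = / sqrt PI * (/ sqrt 2 * gauss_kernel (/ sqrt 2 * x + 0)).
Proof.
  unfold gauss_density, gauss_kernel.
  rewrite sqrt_mult by (try lra; apply Rlt_le, PI_RGT_0).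
  assert (H2 : sqrt 2 * sqrt 2 = 2) by (apply sqrt_sqrt; lra).
  assert (H3 : 0 < sqrt 2) by (apply sqrt_lt_R0; lra). assert (H4 := sqrt_PI_pos).
  replace (- ((/ sqrt 2 * x + 0) * (/ sqrt 2 * x + 0))) with (- x ^ 2 / 2).
  - field; lra.
  - replace ((/ sqrt 2 * x + 0) * (/ sqrt 2 * x + 0)) with (x * x / (sqrt 2 * sqrt 2))
      by (field; lra).
    rewrite H2. field.
Qed.

Definition gauss_mass (N : R) := RInt gauss_density (- N) N.

Lemma gauss_mass_eq N : gauss_mass N = 2 / sqrt PI * erf_prim (N / sqrt 2).
Proof.
  assert (H3 : 0 < sqrt 2) by (apply sqrt_lt_R0; lra). assert (H4 := sqrt_PI_pos).
  unfold gauss_mass.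
  rewrite (RInt_ext _ (fun x => / sqrt PI * (/ sqrt 2 * gauss_kernel (/ sqrt 2 * x + 0))))
    by (intros; apply gauss_density_eq).
  rewrite RInt_scal_R.
  2:{ apply ex_RInt_continuous_R; intros; apply continuous_of_ex_derive;
      unfold gauss_kernel; auto_derive; auto. }
  rewrite RInt_comp_lin_R by apply ex_RInt_gauss_kernel.
  rewrite <- (RInt_Chasles_R _ _ 0) by apply ex_RInt_gauss_kernel.
  rewrite RInt_swap_R by apply ex_RInt_gauss_kernel.
  fold (erf_prim (/ sqrt 2 * - N + 0)) (erf_prim (/ sqrt 2 * N + 0)).
  replace (/ sqrt 2 * - N + 0) with (- (N / sqrt 2)) by (field; lra).
  replace (/ sqrt 2 * N + 0) with (N / sqrt 2) by (field; lra).
  rewrite erf_prim_opp. as_R_eq; field. lra.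
Qed.

Lemma gauss_mass_bounds N : 0 <= N ->
  0 <= gauss_mass N <= 1 /\ 1 - gauss_mass N <= 4 * exp (- (N * N / 2)) / PI.
Proof.
  intro HN. rewrite gauss_mass_eq.
  assert (H2 : sqrt 2 * sqrt 2 = 2) by (apply sqrt_sqrt; lra).
  assert (H3 : 0 < sqrt 2) by (apply sqrt_lt_R0; lra). assert (H4 := sqrt_PI_pos).
  destruct (erf_prim_bounds (N / sqrt 2)) as [[B1 B2] B3]; [apply Rle_mult_inv_pos; lra |].
  replace (N / sqrt 2 * (N / sqrt 2)) with (N * N / (sqrt 2 * sqrt 2)) in B3
    by (field; lra).
  rewrite H2 in B3.
  assert (HPP := sqrt_PI_sqr).
  set (g := erf_prim (N / sqrt 2)) in *. set (e := exp (- (N * N / 2))) in *.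
  set (s := sqrt PI) in *. assert (0 <= e) by apply Rlt_le, exp_pos.
  replace (2 / s * g) with (g / (s / 2)) by (field; lra).
  replace (4 * e / PI) with (e / (s / 2) / (s / 2)) by (rewrite <- HPP; field; lra).
  replace (1 - g / (s / 2)) with ((s / 2 - g) / (s / 2)) by (field; lra).
  split; [split |].
  - apply Rle_mult_inv_pos; lra.
  - apply Rmult_le_reg_r with (s / 2); [lra |].
    unfold Rdiv at 1. rewrite Rmult_assoc, Rinv_l by lra. lra.
  - unfold Rdiv at 1 3. apply Rmult_le_compat_r; auto.
    apply Rlt_le, Rinv_0_lt_compat; lra.
Qed.

(** * Real sequences *)

Lemma cv_exp_opp y : cv_infty y -> Un_cv (fun n => exp (- y n)) 0.
Proof.
  intros Hy eps He. destruct (Hy (/ eps)) as [N HN]. exists N. intros n Hn.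
  specialize (HN n Hn). assert (Hi : 0 < / eps) by (apply Rinv_0_lt_compat; auto).
  unfold Rdist. rewrite Rminus_0_r, Rabs_pos_eq by apply Rlt_le, exp_pos.
  rewrite exp_Ropp. replace eps with (/ / eps) by (field; lra).
  apply Rinv_lt_contravar; [apply Rmult_lt_0_compat; [lra | apply exp_pos] |].
  assert (H := exp_ineq1_le (y n)). lra.
Qed.

Lemma cv_infty_INR : cv_infty INR.
Proof.
  intros B. destruct (archimed (Rabs B)) as [H1 _].
  destruct (IZN (up (Rabs B))) as [k Hk].
  { apply le_IZR. assert (H := Rabs_pos B). lra. }
  exists k. intros n Hn. apply le_INR in Hn. rewrite Hk, <- INR_IZR_INZ in H1.
  assert (H := Rle_abs B). lra.
Qed.

Lemma cv_infty_affine y al be : cv_infty y -> 0 < al -> cv_infty (fun n => al * y n + be).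
Proof.
  intros Hy Ha B. destruct (Hy ((B - be) / al)) as [N HN]. exists N. intros n Hn.
  specialize (HN n Hn). apply Rmult_lt_compat_l with (r := al) in HN; [| lra].
  replace (al * ((B - be) / al)) with (B - be) in HN by (field; lra). lra.
Qed.

Lemma cv_infty_le y z : cv_infty y ->
  (exists N0, forall n, (N0 <= n)%nat -> y n <= z n) -> cv_infty z.
Proof.
  intros Hy [N0 H] B. destruct (Hy B) as [N HN]. exists (max N N0). intros n Hn.
  specialize (HN n ltac:(lia)). specialize (H n ltac:(lia)). lra.
Qed.

Lemma cv_const c : Un_cv (fun _ => c) c.
Proof. intros e He; exists 0%nat; intros; unfold Rdist; rewrite Rminus_diag, Rabs_R0; auto. Qed.

Lemma cv_scal0 u K : Un_cv u 0 -> Un_cv (fun n => K * u n) 0.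
Proof. intro H. rewrite <- (Rmult_0_r K). apply CV_mult; auto using cv_const. Qed.

Lemma cv_of_abs_le u v : (exists N, forall n, (N <= n)%nat -> Rabs (u n) <= v n) ->
  Un_cv v 0 -> Un_cv u 0.
Proof.
  intros [N HN] Hv eps He. destruct (Hv eps He) as [N2 H2]. exists (max N N2). intros n Hn.
  specialize (HN n ltac:(lia)). specialize (H2 n ltac:(lia)). unfold Rdist in *.
  rewrite Rminus_0_r in *. assert (H := Rle_abs (v n)). lra.
Qed.

Lemma cv_of_tail_bound (s t : nat -> R) :
  (forall n m, (n <= m)%nat -> Rabs (s m - s n) <= t n) -> Un_cv t 0 -> {l | Un_cv s l}.
Proof.
  intros H Ht. apply Rcomplete.R_complete. intros eps He.
  destruct (Ht (eps / 2)) as [N HN]; [lra |].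
  exists N. intros n m Hn Hm. unfold Rdist.
  assert (A1 := H N n Hn). assert (A2 := H N m Hm). specialize (HN N (le_n _)).
  unfold Rdist in HN. rewrite Rminus_0_r in HN. assert (HN' := Rle_abs (t N)).
  replace (s n - s m) with ((s n - s N) - (s m - s N)) by ring.
  eapply Rle_lt_trans; [apply Rabs_triang |]. rewrite Rabs_Ropp. lra.
Qed.

(** * Gaussian means of bounded Lipschitz functions *)

Lemma cv_gauss_tail : Un_cv (fun n => exp (- (INR n * INR n / 2))) 0.
Proof.
  apply cv_exp_opp, (cv_infty_le (fun n => 1 * INR n + - (1 / 2))).
  - apply cv_infty_affine; [apply cv_infty_INR | lra].
  - exists 0%nat. intros n _. assert (H := Rle_0_sqr (INR n - 1)). unfold Rsqr in H. lra.
Qed.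

Definition bounded_lipschitz (phi : R -> R) := exists C L, 0 <= C /\ 0 <= L /\
  (forall x, Rabs (phi x) <= C) /\ (forall x y, Rabs (phi x - phi y) <= L * Rabs (x - y)).

Definition gauss_mean (phi : R -> R) := full_int (fun x => gauss_density x * phi x).

Definition gauss_mean_trunc (phi : R -> R) (N : R) :=
  RInt (fun x => gauss_density x * phi x) (- N) N.

Lemma bounded_lipschitz_plus f g :
  bounded_lipschitz f -> bounded_lipschitz g -> bounded_lipschitz (fun x => f x + g x).
Proof.
  intros [C1 [L1 [? [? [B1 L1']]]]] [C2 [L2 [? [? [B2 L2']]]]]. exists (C1 + C2), (L1 + L2).
  repeat split; try lra.
  - intros x. eapply Rle_trans; [apply Rabs_triang |]. specialize (B1 x); specialize (B2 x); lra.
  - intros x y. replace (f x + g x - (f y + g y)) with ((f x - f y) + (g x - g y)) by ring.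
    eapply Rle_trans; [apply Rabs_triang |]. specialize (L1' x y); specialize (L2' x y); lra.
Qed.

Lemma bounded_lipschitz_scal f c : bounded_lipschitz f -> bounded_lipschitz (fun x => c * f x).
Proof.
  intros [C1 [L1 [? [? [B1 L1']]]]]. exists (Rabs c * C1), (Rabs c * L1).
  assert (Hc := Rabs_pos c). repeat split; try (apply Rmult_le_pos; auto).
  - intros x. rewrite Rabs_mult. apply Rmult_le_compat_l; auto.
  - intros x y. replace (c * f x - c * f y) with (c * (f x - f y)) by ring.
    rewrite Rabs_mult, Rmult_assoc. apply Rmult_le_compat_l; auto.
Qed.

Lemma bounded_lipschitz_const c : bounded_lipschitz (fun _ => c).
Proof.
  exists (Rabs c), 0. repeat split; [apply Rabs_pos | lra | intros; lra |].
  intros. rewrite Rminus_diag, Rabs_R0. lra.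
Qed.

Lemma continuous_of_bounded_lipschitz phi x : bounded_lipschitz phi -> continuous phi x.
Proof.
  intros [C [L [_ [HL [_ H]]]]]. apply continuity_pt_filterlim.
  intros e He. exists (e / (L + 1)). split; [apply Rdiv_lt_0_compat; lra |].
  intros y [_ Hy]. simpl in *. unfold Rdist in *. eapply Rle_lt_trans; [apply H |].
  apply Rle_lt_trans with (L * (e / (L + 1))); [apply Rmult_le_compat_l; lra |].
  apply Rlt_le_trans with ((L + 1) * (e / (L + 1))); [| right; field; lra].
  apply Rmult_lt_compat_r; [apply Rdiv_lt_0_compat |]; lra.
Qed.

Lemma ex_RInt_gauss_mul phi a b :
  bounded_lipschitz phi -> ex_RInt (fun x => gauss_density x * phi x) a b.
Proof.
  intro G. apply ex_RInt_continuous_R. intros z _.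
  apply (continuous_mult (K := R_AbsRing)); [apply continuous_gauss_density |].
  apply continuous_of_bounded_lipschitz, G.
Qed.

Lemma ex_RInt_scal_gauss_density c a b : ex_RInt (fun x => c * gauss_density x) a b.
Proof.
  apply ex_RInt_continuous_R. intros z _.
  apply (continuous_mult (K := R_AbsRing));
    [apply continuous_const | apply continuous_gauss_density].
Qed.

Lemma abs_RInt_gauss_mul_le phi C a b : a <= b -> bounded_lipschitz phi ->
  (forall x, Rabs (phi x) <= C) ->
  Rabs (RInt (fun x => gauss_density x * phi x) a b) <= C * RInt gauss_density a b.
Proof.
  intros Hab G HC. apply Rabs_le_between.
  rewrite Ropp_mult_distr_l, <- !RInt_scal_R by apply ex_RInt_gauss_density.
  split; apply RInt_le; auto using ex_RInt_scal_gauss_density, ex_RInt_gauss_mul;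
    intros x _; specialize (HC x); apply Rabs_le_between in HC;
    assert (H := gauss_density_pos x); nra.
Qed.

Lemma gauss_mean_trunc_diff phi C n m : 0 <= n <= m -> bounded_lipschitz phi ->
  (forall x, Rabs (phi x) <= C) ->
  Rabs (gauss_mean_trunc phi m - gauss_mean_trunc phi n) <= C * (4 * exp (- (n * n / 2)) / PI).
Proof.
  intros Hn G HC. assert (HC0 : 0 <= C) by (eapply Rle_trans; [apply Rabs_pos | apply (HC 0)]).
  unfold gauss_mean_trunc.
  rewrite <- (RInt_Chasles_R _ (- m) (- n) m), <- (RInt_Chasles_R _ (- n) n m)
    by apply ex_RInt_gauss_mul, G.
  match goal with |- Rabs (?A + (?B + ?E) - ?B) <= _ =>
    replace (A + (B + E) - B) with (A + E) by ring end.
  eapply Rle_trans; [apply Rabs_triang |].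
  assert (H1 := abs_RInt_gauss_mul_le phi C (- m) (- n) ltac:(lra) G HC).
  assert (H2 := abs_RInt_gauss_mul_le phi C n m ltac:(lra) G HC).
  destruct (gauss_mass_bounds m) as [[_ Hm] _]; [lra |].
  destruct (gauss_mass_bounds n) as [_ Htail]; [lra |].
  unfold gauss_mass in *.
  rewrite <- (RInt_Chasles_R _ (- m) (- n) m), <- (RInt_Chasles_R _ (- n) n m) in Hm
    by apply ex_RInt_gauss_density.
  apply Rle_trans with (C * (RInt gauss_density (- m) (- n) + RInt gauss_density n m));
    [lra | apply Rmult_le_compat_l; lra].
Qed.

Lemma RI_eq_RInt f a b : ex_RInt f a b -> RI f a b = RInt f a b.
Proof.
  intro H. unfold RI. destruct excluded_middle_informative as [h | h].
  - destruct constructive_indefinite_description as [pr Hpr]. simpl. symmetry; apply RInt_Reals.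
  - exfalso; apply h. constructor. apply ex_RInt_Reals_0; auto.
Qed.

Lemma gauss_mean_spec phi :
  bounded_lipschitz phi -> Un_cv (fun n => gauss_mean_trunc phi (INR n)) (gauss_mean phi).
Proof.
  intro G. destruct G as [C [L [HC [HL [HB HLip]]]]].
  assert (G : bounded_lipschitz phi) by (exists C, L; auto).
  destruct (cv_of_tail_bound (fun n => gauss_mean_trunc phi (INR n))
              (fun n => C * (4 * exp (- (INR n * INR n / 2)) / PI))) as [l Hl].
  - intros n m Hnm. apply gauss_mean_trunc_diff; auto.
    split; [apply pos_INR | apply le_INR; auto].
  - apply cv_scal0. apply (Un_cv_ext (fun n => 4 / PI * exp (- (INR n * INR n / 2)))).
    + intros; field. apply PI_neq0.
    + apply cv_scal0, cv_gauss_tail.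
  - assert (Hseq : forall n, RI (fun x => gauss_density x * phi x) (- INR n) (INR n)
                             = gauss_mean_trunc phi (INR n))
      by (intros; apply RI_eq_RInt, ex_RInt_gauss_mul, G).
    unfold gauss_mean, full_int. destruct excluded_middle_informative as [[l' Hl'] | h].
    + destruct constructive_indefinite_description as [l'' Hl'']. simpl.
      eapply Un_cv_ext; [| apply Hl'']. apply Hseq.
    + exfalso. apply h. exists l. eapply Un_cv_ext; [| apply Hl]. intros; symmetry; apply Hseq.
Qed.

Lemma gauss_mass_cv : Un_cv (fun n => gauss_mass (INR n)) 1.
Proof.
  intros eps He.
  destruct (cv_scal0 _ (4 / PI) cv_gauss_tail eps He) as [N HN]. exists N. intros n Hn.
  specialize (HN n Hn). unfold Rdist in *. rewrite Rminus_0_r in HN.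
  destruct (gauss_mass_bounds (INR n) (pos_INR n)) as [[A B] C].
  assert (HP := PI_RGT_0). assert (HE := exp_pos (- (INR n * INR n / 2))).
  rewrite Rabs_left1 by lra.
  rewrite Rabs_pos_eq in HN by (apply Rmult_le_pos; [apply Rlt_le, Rdiv_lt_0_compat |]; lra).
  replace (4 / PI * exp (- (INR n * INR n / 2))) with (4 * exp (- (INR n * INR n / 2)) / PI)
    in HN by (field; lra).
  lra.
Qed.

Lemma gauss_mean_le f g : bounded_lipschitz f -> bounded_lipschitz g ->
  (forall x, f x <= g x) -> gauss_mean f <= gauss_mean g.
Proof.
  intros Gf Gg H. eapply Rle_cv_lim; [| apply gauss_mean_spec, Gf | apply gauss_mean_spec, Gg].
  intros n. assert (HN := pos_INR n).
  apply RInt_le; auto using ex_RInt_gauss_mul; [lra |].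
  intros x _. apply Rmult_le_compat_l; auto. apply Rlt_le, gauss_density_pos.
Qed.

Lemma gauss_mean_plus f g : bounded_lipschitz f -> bounded_lipschitz g ->
  gauss_mean (fun x => f x + g x) = gauss_mean f + gauss_mean g.
Proof.
  intros Gf Gg. eapply UL_sequence; [apply gauss_mean_spec, bounded_lipschitz_plus; auto |].
  eapply Un_cv_ext; [| apply CV_plus; apply gauss_mean_spec; eauto].
  intros n. unfold gauss_mean_trunc.
  rewrite <- RInt_plus_R by (apply ex_RInt_gauss_mul; assumption).
  apply RInt_ext. intros; as_R_eq; ring.
Qed.

Lemma gauss_mean_scal f c : bounded_lipschitz f ->
  gauss_mean (fun x => c * f x) = c * gauss_mean f.
Proof.
  intros Gf. eapply UL_sequence; [apply gauss_mean_spec, bounded_lipschitz_scal, Gf |].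
  eapply Un_cv_ext; [| apply (CV_mult (fun _ => c)); [apply cv_const | apply gauss_mean_spec, Gf]].
  intros n. unfold gauss_mean_trunc. rewrite <- RInt_scal_R by apply ex_RInt_gauss_mul, Gf.
  apply RInt_ext. intros; as_R_eq; ring.
Qed.

Lemma gauss_mean_const c : gauss_mean (fun _ => c) = c.
Proof.
  eapply UL_sequence; [apply gauss_mean_spec, bounded_lipschitz_const |].
  assert (H := CV_mult (fun _ => c) _ c 1 (cv_const c) gauss_mass_cv). rewrite Rmult_1_r in H.
  eapply Un_cv_ext; [| apply H]. intros n. unfold gauss_mean_trunc, gauss_mass.
  rewrite <- RInt_scal_R by apply ex_RInt_gauss_density.
  apply RInt_ext; intros; as_R_eq; ring.
Qed.

Lemma gauss_mean_ext f g : (forall x, f x = g x) -> gauss_mean f = gauss_mean g.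
Proof. intro H. replace f with g; auto. apply functional_extensionality; auto. Qed.

Lemma RInt_gauss_density_le a b : a <= b -> RInt gauss_density a b <= 1.
Proof.
  intros Hab. set (N := Rmax (Rabs a) (Rabs b)).
  assert (Ha : - N <= a).
  { assert (H := Rmax_l (Rabs a) (Rabs b)). assert (H2 := Rle_abs (- a)).
    rewrite Rabs_Ropp in H2. unfold N; lra. }
  assert (Hb : b <= N).
  { assert (H := Rmax_r (Rabs a) (Rabs b)). assert (H2 := Rle_abs b). unfold N; lra. }
  destruct (gauss_mass_bounds N) as [[_ H1] _]; [lra |]. unfold gauss_mass in H1.
  rewrite <- (RInt_Chasles_R _ (- N) a N), <- (RInt_Chasles_R _ a b N) in H1
    by apply ex_RInt_gauss_density.
  assert (0 <= RInt gauss_density (- N) a).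
  { apply RInt_ge0_R; auto using ex_RInt_gauss_density. intros; apply Rlt_le, gauss_density_pos. }
  assert (0 <= RInt gauss_density b N).
  { apply RInt_ge0_R; auto using ex_RInt_gauss_density. intros; apply Rlt_le, gauss_density_pos. }
  lra.
Qed.

Lemma gauss_density_mul_exp c m x :
  gauss_density x * exp (c * (x - m)) = exp (c * c / 2 - c * m) * gauss_density (x - c).
Proof.
  unfold gauss_density. assert (H := sqrt_2PI_pos).
  replace (exp (- x ^ 2 / 2) / sqrt (2 * PI) * exp (c * (x - m))) with
    (exp (- x ^ 2 / 2 + c * (x - m)) / sqrt (2 * PI)) by (rewrite exp_plus; field; lra).
  replace (- x ^ 2 / 2 + c * (x - m)) with (c * c / 2 - c * m + - (x - c) ^ 2 / 2) by field.
  rewrite exp_plus. field; lra.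
Qed.

(* Chernoff bound: a function dominated by [exp (c (x - m))] has Gaussian mean at most
   [E[exp (c (U - m))] = exp (c^2/2 - c m)]. *)
Lemma gauss_mean_le_exp phi c m : bounded_lipschitz phi ->
  (forall x, phi x <= exp (c * (x - m))) -> gauss_mean phi <= exp (c * c / 2 - c * m).
Proof.
  intros G H. eapply Rle_cv_lim; [| apply gauss_mean_spec, G | apply cv_const].
  intros n. unfold gauss_mean_trunc. assert (HN := pos_INR n). set (N := INR n) in *.
  assert (Hshift : forall e, ex_RInt (fun x => e * gauss_density (x + - c)) (- N) N).
  { intros e. apply ex_RInt_continuous_R. intros; apply continuous_of_ex_derive.
    unfold gauss_density. auto_derive. assert (H2 := sqrt_2PI_pos). lra. }
  apply Rle_trans with (RInt (fun x => exp (c * c / 2 - c * m) * gauss_density (x + - c)) (- N) N).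
  - apply RInt_le; auto using ex_RInt_gauss_mul; [lra |].
    intros x _. replace (x + - c) with (x - c) by ring. rewrite <- gauss_density_mul_exp.
    apply Rmult_le_compat_l; auto. apply Rlt_le, gauss_density_pos.
  - rewrite RInt_scal_R.
    2:{ apply (ex_RInt_ext (fun x => 1 * gauss_density (x + - c))); [| apply Hshift].
        intros; apply Rmult_1_l. }
    rewrite <- (Rmult_1_r (exp _)) at 2. apply Rmult_le_compat_l; [apply Rlt_le, exp_pos |].
    rewrite (RInt_ext _ (fun x => 1 * gauss_density (1 * x + - c)))
      by (intros; rewrite !Rmult_1_l; reflexivity).
    rewrite RInt_comp_lin_R by apply ex_RInt_gauss_density.
    apply RInt_gauss_density_le. lra.
Qed.

Lemma cv_ge_eventually u l B : (exists N0, forall n, (N0 <= n)%nat -> B <= u n) ->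
  Un_cv u l -> B <= l.
Proof.
  intros [N0 H] Hu. destruct (Rle_dec B l) as [| Hn]; auto. exfalso.
  destruct (Hu (B - l)) as [N1 HN1]; [lra |].
  specialize (HN1 (max N0 N1) ltac:(lia)). specialize (H (max N0 N1) ltac:(lia)).
  unfold Rdist in HN1. assert (H2 := Rle_abs (u (max N0 N1) - l)). lra.
Qed.

Lemma gauss_density_antitone x y : 0 <= x <= y -> gauss_density y <= gauss_density x.
Proof.
  intros H. unfold gauss_density, Rdiv. apply Rmult_le_compat_r.
  - apply Rlt_le, Rinv_0_lt_compat, sqrt_2PI_pos.
  - apply exp_le. nra.
Qed.

Lemma gauss_mean_ge_density psi a : bounded_lipschitz psi -> 0 <= a ->
  (forall x, 0 <= psi x) -> (forall x, a <= x <= a + 1 -> 1 <= psi x) ->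
  gauss_density (a + 1) <= gauss_mean psi.
Proof.
  intros G Ha H0 H1. apply cv_ge_eventually with (2 := gauss_mean_spec psi G).
  destruct (archimed (a + 1)) as [Hu _].
  destruct (IZN (up (a + 1))) as [k Hk]; [apply le_IZR; lra |].
  exists k. intros n Hn. apply le_INR in Hn. rewrite Hk, <- INR_IZR_INZ in Hu.
  assert (HN : a + 1 <= INR n) by lra. unfold gauss_mean_trunc. set (N := INR n) in *.
  assert (Hpos : forall b c, b <= c -> 0 <= RInt (fun x => gauss_density x * psi x) b c).
  { intros b c Hbc. apply RInt_ge0_R; auto using ex_RInt_gauss_mul.
    intros; apply Rmult_le_pos; auto. apply Rlt_le, gauss_density_pos. }
  rewrite <- (RInt_Chasles_R _ (- N) a N), <- (RInt_Chasles_R _ a (a + 1) N)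
    by apply ex_RInt_gauss_mul, G.
  assert ((a + 1 - a) * gauss_density (a + 1)
          <= RInt (fun x => gauss_density x * psi x) a (a + 1)).
  { apply RInt_ge_const_R; auto using ex_RInt_gauss_mul; [lra |]. intros x Hx.
    assert (gauss_density (a + 1) <= gauss_density x) by (apply gauss_density_antitone; lra).
    assert (1 <= psi x) by (apply H1; lra). assert (H5 := gauss_density_pos x). nra. }
  assert (H2 := Hpos (- N) a ltac:(lra)). assert (H3 := Hpos (a + 1) N ltac:(lra)). lra.
Qed.

(** * Gaussian expectations in several variables *)

Definition upd (u : nat -> R) k x : nat -> R := fun i => if Nat.eqb i k then x else u i.

Lemma upd_same u k x : upd u k x k = x.
Proof. unfold upd. rewrite Nat.eqb_refl. auto. Qed.

Lemma upd_other u k x i : i <> k -> upd u k x i = u i.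
Proof. intro H. unfold upd. apply Nat.eqb_neq in H. rewrite H. auto. Qed.

Lemma upd_upd_same u k x y : upd (upd u k y) k x = upd u k x.
Proof. apply functional_extensionality; intro i. unfold upd. destruct (Nat.eqb i k); auto. Qed.

Lemma upd_comm u i k x y : i <> k -> upd (upd u i y) k x = upd (upd u k x) i y.
Proof.
  intro H. apply functional_extensionality; intro j. unfold upd.
  destruct (Nat.eqb_spec j k); destruct (Nat.eqb_spec j i); subst; auto. lia.
Qed.

Definition coordwise_lipschitz (f : (nat -> R) -> R) := exists C L, 0 <= C /\ 0 <= L /\
  (forall u, Rabs (f u) <= C) /\
  (forall u i y, Rabs (f (upd u i y) - f u) <= L * Rabs (y - u i)).

Lemma coordwise_lipschitz_ext f g :
  (forall u, f u = g u) -> coordwise_lipschitz f -> coordwise_lipschitz g.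
Proof. intros H G. replace g with f; auto. apply functional_extensionality; auto. Qed.

Lemma coordwise_lipschitz_plus f g : coordwise_lipschitz f -> coordwise_lipschitz g ->
  coordwise_lipschitz (fun u => f u + g u).
Proof.
  intros [C1 [L1 [? [? [B1 L1']]]]] [C2 [L2 [? [? [B2 L2']]]]]. exists (C1 + C2), (L1 + L2).
  repeat split; try lra.
  - intros x. eapply Rle_trans; [apply Rabs_triang |]. specialize (B1 x); specialize (B2 x); lra.
  - intros u i y.
    match goal with |- Rabs (?a + ?b - (?c + ?d)) <= _ =>
      replace (a + b - (c + d)) with ((a - c) + (b - d)) by ring end.
    eapply Rle_trans; [apply Rabs_triang |]. specialize (L1' u i y); specialize (L2' u i y); lra.
Qed.

Lemma coordwise_lipschitz_scal f c :
  coordwise_lipschitz f -> coordwise_lipschitz (fun u => c * f u).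
Proof.
  intros [C1 [L1 [? [? [B1 L1']]]]]. exists (Rabs c * C1), (Rabs c * L1).
  assert (Hc := Rabs_pos c). repeat split; try (apply Rmult_le_pos; auto).
  - intros x. rewrite Rabs_mult. apply Rmult_le_compat_l; auto.
  - intros u i y.
    match goal with |- Rabs (c * ?a - c * ?b) <= _ =>
      replace (c * a - c * b) with (c * (a - b)) by ring end.
    rewrite Rabs_mult, Rmult_assoc. apply Rmult_le_compat_l; auto.
Qed.

Lemma coordwise_lipschitz_const c : coordwise_lipschitz (fun _ => c).
Proof.
  exists (Rabs c), 0. repeat split; [apply Rabs_pos | lra | intros; lra |].
  intros. rewrite Rminus_diag, Rabs_R0. lra.
Qed.

Lemma coordwise_lipschitz_minus f g : coordwise_lipschitz f -> coordwise_lipschitz g ->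
  coordwise_lipschitz (fun u => f u - g u).
Proof.
  intros Gf Gg. apply (coordwise_lipschitz_ext (fun u => f u + (-1) * g u)); [intros; ring |].
  apply coordwise_lipschitz_plus, coordwise_lipschitz_scal; auto.
Qed.

Lemma coordwise_lipschitz_mult f g : coordwise_lipschitz f -> coordwise_lipschitz g ->
  coordwise_lipschitz (fun u => f u * g u).
Proof.
  intros [C1 [L1 [? [? [B1 L1']]]]] [C2 [L2 [? [? [B2 L2']]]]].
  exists (C1 * C2), (L1 * C2 + C1 * L2).
  repeat split; try (apply Rmult_le_pos; auto);
    try (apply Rplus_le_le_0_compat; apply Rmult_le_pos; auto).
  - intros x. rewrite Rabs_mult. apply Rmult_le_compat; auto; apply Rabs_pos.
  - intros u i y.
    match goal with |- Rabs (?a * ?b - ?c * ?d) <= _ =>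
      replace (a * b - c * d) with ((a - c) * b + c * (b - d)) by ring end.
    eapply Rle_trans; [apply Rabs_triang |]. rewrite !Rabs_mult.
    assert (A1 := L1' u i y). assert (A2 := L2' u i y).
    assert (A3 := B2 (upd u i y)). assert (A4 := B1 u). assert (A5 := Rabs_pos (y - u i)).
    assert (Rabs (f (upd u i y) - f u) * Rabs (g (upd u i y)) <= L1 * Rabs (y - u i) * C2)
      by (apply Rmult_le_compat; auto; apply Rabs_pos).
    assert (Rabs (f u) * Rabs (g (upd u i y) - g u) <= C1 * (L2 * Rabs (y - u i)))
      by (apply Rmult_le_compat; auto; apply Rabs_pos).
    nra.
Qed.

Lemma coordwise_lipschitz_coord phi j :
  bounded_lipschitz phi -> coordwise_lipschitz (fun u => phi (u j)).
Proof.
  intros [C [L [? [? [B Lp]]]]]. exists C, L. repeat split; auto.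
  intros u i y. destruct (Nat.eq_dec i j) as [-> | Hij].
  - rewrite upd_same. apply Lp.
  - rewrite upd_other by auto. rewrite Rminus_diag, Rabs_R0.
    apply Rmult_le_pos; auto; apply Rabs_pos.
Qed.

Lemma coordwise_lipschitz_upd f k x :
  coordwise_lipschitz f -> coordwise_lipschitz (fun u => f (upd u k x)).
Proof.
  intros [C [L [? [? [B Lp]]]]]. exists C, L. repeat split; auto.
  intros u i y. destruct (Nat.eq_dec i k) as [-> | Hik].
  - rewrite upd_upd_same, Rminus_diag, Rabs_R0. apply Rmult_le_pos; auto; apply Rabs_pos.
  - rewrite upd_comm by auto. rewrite <- (upd_other u k x i Hik). apply Lp.
Qed.

Lemma coordwise_lipschitz_sum n (F : nat -> (nat -> R) -> R) :
  (forall j, (j <= n)%nat -> coordwise_lipschitz (F j)) ->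
  coordwise_lipschitz (fun u => sum_f_R0 (fun j => F j u) n).
Proof.
  induction n as [| n IH]; intros H; simpl; [apply H; lia |].
  apply coordwise_lipschitz_plus; [apply IH; intros |]; apply H; lia.
Qed.

Lemma gexp_ext k f g : (forall u, f u = g u) -> gexp k f = gexp k g.
Proof. intro H. replace f with g; auto. apply functional_extensionality; auto. Qed.

Lemma gexp_S k f : gexp (S k) f = gauss_mean (fun x => gexp k (fun u => f (upd u k x))).
Proof. reflexivity. Qed.

(* The laws making [gexp k] a normalised positive linear functional on coordinatewise
   Lipschitz integrands; they are proved together by induction on [k]. *)
Definition gexp_laws k :=
  (forall f g, coordwise_lipschitz f -> coordwise_lipschitz g ->
     (forall u, f u <= g u) -> gexp k f <= gexp k g) /\
  (forall f g, coordwise_lipschitz f -> coordwise_lipschitz g ->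
     gexp k (fun u => f u + g u) = gexp k f + gexp k g) /\
  (forall f c, coordwise_lipschitz f -> gexp k (fun u => c * f u) = c * gexp k f) /\
  (forall c, gexp k (fun _ => c) = c).

(* Monotonicity and linearity transport the coordinatewise Lipschitz constant of [f]
   to the section [x |-> gexp k (f (upd _ k x))]. *)
Lemma bounded_lipschitz_section k f : gexp_laws k -> coordwise_lipschitz f ->
  bounded_lipschitz (fun x => gexp k (fun u => f (upd u k x))).
Proof.
  intros [Hm [Hp [_ Hc]]] Gf. pose proof Gf as [C [L [HC0 [HL [HC HLp]]]]].
  assert (HCb : forall u, - C <= f u <= C) by (intros; apply Rabs_le_between, HC).
  assert (Hlip : forall u x y, Rabs (f (upd u k x) - f (upd u k y)) <= L * Rabs (x - y)).
  { intros u x y. specialize (HLp (upd u k y) k x).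
    rewrite upd_upd_same, upd_same in HLp. exact HLp. }
  assert (Gs := fun x => coordwise_lipschitz_upd f k x Gf).
  exists C, L. repeat split; auto.
  - intros x. apply Rabs_le_between. split.
    + rewrite <- (Hc (- C)). apply Hm; auto using coordwise_lipschitz_const.
      intros u. apply HCb.
    + rewrite <- (Hc C). apply Hm; auto using coordwise_lipschitz_const.
      intros u. apply HCb.
  - intros x y.
    assert (Hxy : forall x y, gexp k (fun u => f (upd u k x))
                              <= gexp k (fun u => f (upd u k y)) + L * Rabs (x - y)).
    { intros x' y'. rewrite <- (Hc (L * Rabs (x' - y'))), <- Hp
        by auto using coordwise_lipschitz_const.
      apply Hm; auto using coordwise_lipschitz_plus, coordwise_lipschitz_const.
      intros u. specialize (Hlip u x' y'). apply Rabs_le_between in Hlip. lra. }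
    assert (H1 := Hxy x y). assert (H2 := Hxy y x). rewrite Rabs_minus_sym in H2.
    apply Rabs_le_between. lra.
Qed.

Lemma gexp_laws_hold k : gexp_laws k.
Proof.
  induction k as [| k IH]; [repeat split; simpl; intros; auto |].
  assert (Gs := fun f => bounded_lipschitz_section k f IH).
  destruct IH as [Hm [Hp [Hs Hc]]]. repeat split.
  - intros f g Gf Gg H. rewrite !gexp_S.
    apply gauss_mean_le; auto. intros x. apply Hm; auto using coordwise_lipschitz_upd.
  - intros f g Gf Gg. rewrite !gexp_S, <- gauss_mean_plus by auto.
    apply gauss_mean_ext. intros x.
    apply (Hp (fun u => f (upd u k x)) (fun u => g (upd u k x)));
      auto using coordwise_lipschitz_upd.
  - intros f c Gf. rewrite !gexp_S, <- gauss_mean_scal by auto.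
    apply gauss_mean_ext. intros x.
    apply (Hs (fun u => f (upd u k x))); auto using coordwise_lipschitz_upd.
  - intros c. rewrite gexp_S. transitivity (gauss_mean (fun _ => c)).
    + apply gauss_mean_ext. intros; apply Hc.
    + apply gauss_mean_const.
Qed.

Lemma gexp_le k f g : coordwise_lipschitz f -> coordwise_lipschitz g ->
  (forall u, f u <= g u) -> gexp k f <= gexp k g.
Proof. apply (gexp_laws_hold k). Qed.

Lemma gexp_plus k f g : coordwise_lipschitz f -> coordwise_lipschitz g ->
  gexp k (fun u => f u + g u) = gexp k f + gexp k g.
Proof. apply (gexp_laws_hold k). Qed.

Lemma gexp_scal k f c : coordwise_lipschitz f -> gexp k (fun u => c * f u) = c * gexp k f.
Proof. apply (gexp_laws_hold k). Qed.

Lemma gexp_const k c : gexp k (fun _ => c) = c.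
Proof. apply (gexp_laws_hold k). Qed.

Lemma gexp_one_minus k f : coordwise_lipschitz f -> gexp k (fun u => 1 - f u) = 1 - gexp k f.
Proof.
  intros Gf. rewrite (gexp_ext _ _ (fun u => (fun _ => 1) u + (fun u => -1 * f u) u))
    by (intros; ring).
  rewrite gexp_plus, gexp_const, gexp_scal;
    auto using coordwise_lipschitz_const, coordwise_lipschitz_scal.
  ring.
Qed.

Lemma gexp_sum k n (F : nat -> (nat -> R) -> R) :
  (forall j, (j <= n)%nat -> coordwise_lipschitz (F j)) ->
  gexp k (fun u => sum_f_R0 (fun j => F j u) n) = sum_f_R0 (fun j => gexp k (F j)) n.
Proof.
  induction n as [| n IH]; intros H; simpl; auto.
  rewrite gexp_plus, IH; auto. apply coordwise_lipschitz_sum. all: intros; apply H; lia.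
Qed.

Lemma gexp_mul_coord k F h : coordwise_lipschitz F -> bounded_lipschitz h ->
  (forall u x, F (upd u k x) = F u) ->
  gexp (S k) (fun u => F u * h (u k)) = gexp k F * gauss_mean h.
Proof.
  intros GF Gh HF. rewrite gexp_S, <- gauss_mean_scal by auto.
  apply gauss_mean_ext. intros x. rewrite (gexp_ext k _ (fun u => h x * F u)).
  - rewrite gexp_scal; auto. ring.
  - intros u. rewrite HF, upd_same. ring.
Qed.

Lemma gexp_S_indep k F : (forall u x, F (upd u k x) = F u) -> gexp (S k) F = gexp k F.
Proof.
  intros HF. rewrite gexp_S. transitivity (gauss_mean (fun _ => gexp k F)).
  - apply gauss_mean_ext. intros x. apply gexp_ext. auto.
  - apply gauss_mean_const.
Qed.

Lemma gexp_coord M j phi : bounded_lipschitz phi -> (j < M)%nat ->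
  gexp M (fun u => phi (u j)) = gauss_mean phi.
Proof.
  intros Gp HM. induction M as [| M IH]; [lia |].
  destruct (Nat.eq_dec j M) as [-> | HjM].
  - rewrite (gexp_ext _ _ (fun u => (fun _ => 1) u * phi (u M))) by (intros; ring).
    rewrite gexp_mul_coord, gexp_const; auto using coordwise_lipschitz_const. ring.
  - rewrite gexp_S_indep; [apply IH; lia |]. intros u x. rewrite upd_other; auto.
Qed.

Definition prod_coords (h : R -> R) m (u : nat -> R) := prod_f_R0 (fun j => h (u (S j))) m.

Lemma coordwise_lipschitz_prod_coords h m :
  bounded_lipschitz h -> coordwise_lipschitz (prod_coords h m).
Proof.
  intros Gh. induction m as [| m IH]; unfold prod_coords; simpl;
    auto using coordwise_lipschitz_coord, coordwise_lipschitz_mult.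
Qed.

Lemma prod_coords_upd h m u k x : (S m < k)%nat -> prod_coords h m (upd u k x) = prod_coords h m u.
Proof.
  intros Hk. unfold prod_coords. induction m as [| m IH]; simpl;
    rewrite ?IH by lia; rewrite upd_other; auto; lia.
Qed.

Lemma gexp_prod_coords h m : bounded_lipschitz h ->
  gexp (S (S m)) (prod_coords h m) = gauss_mean h ^ S m.
Proof.
  intros Gh. induction m as [| m IH].
  - apply (gexp_coord 2 1 h) in Gh; [| lia]. simpl. rewrite Rmult_1_r. exact Gh.
  - change (prod_coords h (S m)) with (fun u => prod_coords h m u * h (u (S (S m)))).
    rewrite gexp_mul_coord, IH; auto using coordwise_lipschitz_prod_coords.
    + simpl. ring.
    + intros; apply prod_coords_upd; lia.
Qed.

(** * The integrand *)

Lemma inv_affine_exp_lipschitz c K t t' : 1 <= c -> 0 <= K ->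
  Rabs (/ (c + K * exp t) - / (c + K * exp t')) <= Rabs (t - t').
Proof.
  intros Hc HK. rewrite <- (Rmult_1_l (Rabs (t - t'))), Rabs_minus_sym, (Rabs_minus_sym t).
  apply (bounded_variation (fun s => / (c + K * exp s))
           (fun s => - (K * exp s / ((c + K * exp s) * (c + K * exp s))))).
  intros s _. assert (He := exp_pos s). assert (HKe : 0 <= K * exp s) by nra. split.
  - auto_derive; [lra | field; lra].
  - rewrite Rabs_Ropp, Rabs_pos_eq by (apply Rle_mult_inv_pos; nra).
    apply Rmult_le_reg_r with ((c + K * exp s) * (c + K * exp s)); [nra |].
    unfold Rdiv. rewrite Rmult_assoc, Rinv_l by nra. nra.
Qed.

(* [softmax_first a n u] is the integrand with [a = 1 / sqrt tau] and [M = n + 2]. *)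
Definition softmax_first a n (u : nat -> R) :=
  exp (a * u 0%nat) /
  (exp (a * u 0%nat) + exp (- (a * a)) * sum_f_R0 (fun j => exp (a * u (S j))) n).

Lemma sparc_integrand_eq tau n : 0 < tau ->
  sparc_integrand (n + 2) tau = softmax_first (/ sqrt tau) n.
Proof.
  intros Ht. apply functional_extensionality. intros u. unfold sparc_integrand, softmax_first.
  replace (n + 2 - 2)%nat with n by lia. assert (Hs := sqrt_lt_R0 _ Ht).
  assert (E1 : forall y, y / sqrt tau = / sqrt tau * y) by (intros; unfold Rdiv; ring).
  replace (- (/ sqrt tau * / sqrt tau)) with (- 1 / (sqrt tau * sqrt tau)) by (field; lra).
  rewrite sqrt_sqrt, E1 by lra. do 3 f_equal. apply sum_eq. intros; rewrite E1; reflexivity.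
Qed.

Lemma sum_f_R0_nonneg_exp a u n : 0 <= sum_f_R0 (fun j => exp (a * u (S j))) n.
Proof. apply cond_pos_sum. intros; apply Rlt_le, exp_pos. Qed.

Lemma sum_f_R0_ge_term F n i : (forall j, 0 <= F j) -> (i <= n)%nat -> F i <= sum_f_R0 F n.
Proof.
  intros H Hi. induction n as [| n IH]; simpl.
  - replace i with 0%nat by lia. lra.
  - destruct (Nat.eq_dec i (S n)) as [-> | Hin].
    + assert (H1 := cond_pos_sum F n H). lra.
    + assert (H1 := IH ltac:(lia)). specialize (H (S n)). lra.
Qed.

Lemma sum_f_R0_update F n i v : (i <= n)%nat ->
  sum_f_R0 (fun j => if Nat.eqb j i then v else F j) n = sum_f_R0 F n - F i + v.
Proof.
  intros Hi. induction n as [| n IH]; cbn [sum_f_R0].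
  - replace i with 0%nat by lia. simpl. ring.
  - destruct (Nat.eq_dec i (S n)) as [-> | Hin].
    + rewrite Nat.eqb_refl, (sum_eq _ F); [ring |].
      intros j Hj. destruct (Nat.eqb_spec j (S n)); [lia | auto].
    + rewrite IH by lia. destruct (Nat.eqb_spec (S n) i); [lia | ring].
Qed.

Lemma softmax_first_bounds a n u : 0 < softmax_first a n u <= 1.
Proof.
  unfold softmax_first. assert (H1 := exp_pos (a * u 0%nat)).
  assert (H2 := exp_pos (- (a * a))). assert (H3 := sum_f_R0_nonneg_exp a u n).
  set (S0 := sum_f_R0 _ n) in *. assert (0 <= exp (- (a * a)) * S0) by nra.
  split; [apply Rdiv_lt_0_compat; lra |].
  apply Rmult_le_reg_r with (exp (a * u 0%nat) + exp (- (a * a)) * S0); [lra |].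
  unfold Rdiv. rewrite Rmult_assoc, Rinv_l by lra. lra.
Qed.

Lemma exp_ratio_lipschitz a T z z' : 0 < a -> 0 <= T ->
  Rabs (exp (a * z) / (exp (a * z) + T) - exp (a * z') / (exp (a * z') + T))
  <= a * Rabs (z - z').
Proof.
  intros Ha HT.
  assert (Q : forall z, exp (a * z) / (exp (a * z) + T) = / (1 + T * exp (- a * z))).
  { intros x. replace (- a * x) with (- (a * x)) by ring. rewrite exp_Ropp.
    assert (H := exp_pos (a * x)).
    assert (0 <= T * / exp (a * x))
      by (apply Rmult_le_pos; auto; apply Rlt_le, Rinv_0_lt_compat; auto).
    field. split; lra. }
  rewrite !Q. eapply Rle_trans; [apply inv_affine_exp_lipschitz; lra |].
  replace (- a * z - - a * z') with (- a * (z - z')) by ring.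
  rewrite Rabs_mult, Rabs_Ropp, Rabs_pos_eq by lra. lra.
Qed.

Lemma exp_ratio_lipschitz_denom E0 A eps a z z' : 0 < E0 -> 0 <= A -> 0 < eps -> 0 < a ->
  Rabs (E0 / (E0 + eps * (A + exp (a * z))) - E0 / (E0 + eps * (A + exp (a * z'))))
  <= a * Rabs (z - z').
Proof.
  intros HE0 HA He Ha. set (c := 1 + eps * A / E0).
  assert (Hc : 1 <= c)
    by (unfold c; assert (H := Rle_mult_inv_pos (eps * A) _ ltac:(nra) HE0); lra).
  assert (Q : forall t, E0 / (E0 + eps * (A + exp t)) = / (c + eps / E0 * exp t)).
  { intros t. assert (0 < eps * exp t) by (apply Rmult_lt_0_compat; [| apply exp_pos]; lra).
    unfold c. field. split; nra. }
  rewrite !Q. eapply Rle_trans;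
    [apply inv_affine_exp_lipschitz; auto; apply Rle_mult_inv_pos; lra |].
  replace (a * z - a * z') with (a * (z - z')) by ring.
  rewrite Rabs_mult, (Rabs_pos_eq a) by lra. lra.
Qed.

Lemma softmax_first_lipschitz a n u i y : 0 < a ->
  Rabs (softmax_first a n (upd u i y) - softmax_first a n u) <= a * Rabs (y - u i).
Proof.
  intros Ha. unfold softmax_first. set (eps := exp (- (a * a))).
  assert (He : 0 < eps) by apply exp_pos.
  destruct i as [| i]; [| destruct (Compare_dec.le_lt_dec i n) as [Hi | Hi]].
  - rewrite upd_same. cbn [upd Nat.eqb]. apply exp_ratio_lipschitz; auto.
    apply Rmult_le_pos; [lra | apply sum_f_R0_nonneg_exp].
  - rewrite upd_other by lia.
    rewrite (sum_eq (fun j => exp (a * upd u (S i) y (S j)))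
                    (fun j => if Nat.eqb j i then exp (a * y) else exp (a * u (S j))))
      by (intros j _; unfold upd; simpl; destruct (Nat.eqb j i); auto).
    rewrite sum_f_R0_update by auto.
    set (S0 := sum_f_R0 (fun j => exp (a * u (S j))) n).
    assert (HS : exp (a * u (S i)) <= S0)
      by (apply (sum_f_R0_ge_term (fun j => exp (a * u (S j)))); auto;
          intros; apply Rlt_le, exp_pos).
    replace S0 with (S0 - exp (a * u (S i)) + exp (a * u (S i))) at 2 by ring.
    apply exp_ratio_lipschitz_denom; auto; [apply exp_pos | lra].
  - rewrite upd_other by lia.
    rewrite (sum_eq (fun j => exp (a * upd u (S i) y (S j))) (fun j => exp (a * u (S j))))
      by (intros j Hj; rewrite upd_other by lia; auto).
    rewrite Rminus_diag, Rabs_R0. apply Rmult_le_pos; [lra | apply Rabs_pos].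
Qed.

Lemma coordwise_lipschitz_softmax_first a n : 0 < a -> coordwise_lipschitz (softmax_first a n).
Proof.
  intros Ha. exists 1, a. repeat split; try lra.
  - intros u. destruct (softmax_first_bounds a n u). rewrite Rabs_pos_eq; lra.
  - intros; apply softmax_first_lipschitz, Ha.
Qed.

Definition exp_cap (t : R) := Rmin 1 (exp t).
Definition clamp01 (t : R) := Rmax 0 (Rmin 1 t).

Lemma exp_le_1 t : t <= 0 -> exp t <= 1.
Proof. intro. rewrite <- exp_0. apply exp_le; auto. Qed.

Lemma exp_ge_1 t : 0 <= t -> 1 <= exp t.
Proof. intro. rewrite <- exp_0. apply exp_le; auto. Qed.

Lemma exp_cap_bounds t : 0 <= exp_cap t <= 1.
Proof. unfold exp_cap, Rmin. assert (H := exp_pos t). destruct Rle_dec; lra. Qed.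

Lemma exp_cap_lipschitz t s : Rabs (exp_cap t - exp_cap s) <= Rabs (t - s).
Proof.
  (* on [(-oo, 0]], [exp t - exp s <= t - s] for [s <= t] because [exp] has slope [<= 1] *)
  assert (Hslope : forall s t, s <= t <= 0 -> exp t - exp s <= t - s).
  { intros s' t' H. assert (E : exp s' = exp t' * exp (s' - t'))
      by (rewrite <- exp_plus; f_equal; ring).
    assert (H1 := exp_ineq1_le (s' - t')). assert (H2 := exp_le_1 t' ltac:(lra)).
    assert (H3 := exp_pos t'). rewrite E. nra. }
  assert (Hmono : forall s t, s <= t -> Rabs (exp_cap t - exp_cap s) <= t - s).
  { intros s' t' Hst. unfold exp_cap.
    assert (exp s' <= exp t') by (apply exp_le; lra).
    destruct (Rle_dec 0 s'), (Rle_dec 0 t').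
    - rewrite !Rmin_left by (apply exp_ge_1; lra). rewrite Rminus_diag, Rabs_R0; lra.
    - lra.
    - rewrite Rmin_left by (apply exp_ge_1; lra). rewrite Rmin_right by (apply exp_le_1; lra).
      assert (H1 := Hslope s' 0 ltac:(lra)). rewrite exp_0 in H1.
      assert (H2 := exp_le_1 s' ltac:(lra)). rewrite Rabs_pos_eq; lra.
    - rewrite !Rmin_right by (apply exp_le_1; lra).
      assert (H1 := Hslope s' t' ltac:(lra)). rewrite Rabs_pos_eq; lra. }
  destruct (Rle_dec s t).
  - rewrite (Rabs_pos_eq (t - s)) by lra. apply Hmono; lra.
  - rewrite Rabs_minus_sym, (Rabs_minus_sym t), (Rabs_pos_eq (s - t)) by lra. apply Hmono; lra.
Qed.

Lemma bounded_lipschitz_exp_cap a b : bounded_lipschitz (fun x => exp_cap (a * x + b)).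
Proof.
  exists 1, (Rabs a). repeat split; try lra; [apply Rabs_pos | |].
  - intros x. destruct (exp_cap_bounds (a * x + b)). rewrite Rabs_pos_eq; lra.
  - intros x y. eapply Rle_trans; [apply exp_cap_lipschitz |].
    right. rewrite <- Rabs_mult. f_equal. ring.
Qed.

Lemma exp_cap_le_exp a mu t : 0 <= mu <= a -> exp_cap (a * t) <= exp (mu * t).
Proof.
  intros H. unfold exp_cap. destruct (Rle_dec 0 t).
  - apply Rle_trans with 1; [apply Rmin_l | apply exp_ge_1; nra].
  - apply Rle_trans with (exp (a * t)); [apply Rmin_r | apply exp_le; nra].
Qed.

Lemma clamp01_bounds t : 0 <= clamp01 t <= 1.
Proof. unfold clamp01, Rmax, Rmin. repeat destruct Rle_dec; lra. Qed.

Lemma clamp01_ge1 t : 1 <= t -> clamp01 t = 1.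
Proof. intro. unfold clamp01, Rmax, Rmin. repeat destruct Rle_dec; lra. Qed.

Lemma clamp01_le0 t : t <= 0 -> clamp01 t = 0.
Proof. intro. unfold clamp01, Rmax, Rmin. repeat destruct Rle_dec; lra. Qed.

Lemma bounded_lipschitz_clamp01 b : bounded_lipschitz (fun x => clamp01 (x + b)).
Proof.
  exists 1, 1. repeat split; try lra.
  - intros x. destruct (clamp01_bounds (x + b)). rewrite Rabs_pos_eq; lra.
  - intros x y. rewrite Rmult_1_l. replace (x - y) with (x + b - (y + b)) by ring.
    unfold clamp01, Rmax, Rmin. repeat destruct Rle_dec; unfold Rabs;
      repeat destruct Rcase_abs; lra.
Qed.

Lemma Rmin_1_sum X n : (forall j, 0 <= X j) ->
  Rmin 1 (sum_f_R0 X n) <= sum_f_R0 (fun j => Rmin 1 (X j)) n.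
Proof.
  intros H. induction n as [| n IH]; simpl; [lra |].
  assert (H1 := cond_pos_sum X n H). specialize (H (S n)).
  assert (Rmin 1 (sum_f_R0 X n + X (S n)) <= Rmin 1 (sum_f_R0 X n) + Rmin 1 (X (S n)))
    by (unfold Rmin; repeat destruct Rle_dec; lra).
  lra.
Qed.

(* Union bound: the section coordinate 0 loses either because [U_1] is below [- d a],
   or because some [U_j] is above [(1 - d) a]. *)
Lemma one_minus_softmax_first_le a d n u : 0 < a -> 0 <= d <= 1 ->
  1 - softmax_first a n u <= exp_cap (- a * u 0%nat + - (d * a * a))
    + sum_f_R0 (fun j => exp_cap (a * u (S j) + - ((1 - d) * a * a))) n.
Proof.
  intros Ha Hd.
  assert (Hs := cond_pos_sum (fun j => exp_cap (a * u (S j) + - ((1 - d) * a * a))) n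
                  (fun j => proj1 (exp_cap_bounds _))).
  destruct (softmax_first_bounds a n u) as [F1 F2].
  destruct (Rle_dec 0 (u 0%nat + d * a)) as [Hu | Hu].
  2:{ assert (exp_cap (- a * u 0%nat + - (d * a * a)) = 1)
        by (apply Rmin_left, exp_ge_1; nra).
      lra. }
  assert (HC := exp_cap_bounds (- a * u 0%nat + - (d * a * a))).
  enough (1 - softmax_first a n u
          <= sum_f_R0 (fun j => exp_cap (a * u (S j) + - ((1 - d) * a * a))) n) by lra.
  unfold softmax_first. set (E0 := exp (a * u 0%nat)). set (eps := exp (- (a * a))).
  set (S0 := sum_f_R0 (fun j => exp (a * u (S j))) n).
  assert (HE0 : 0 < E0) by apply exp_pos. assert (He : 0 < eps) by apply exp_pos.
  assert (HS0 : 0 <= S0) by apply sum_f_R0_nonneg_exp.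
  assert (HT : 0 <= eps * S0) by (apply Rmult_le_pos; lra).
  replace (1 - E0 / (E0 + eps * S0)) with (eps * S0 / (E0 + eps * S0)) by (field; lra).
  eapply Rle_trans; [| apply Rmin_1_sum; intros; apply Rlt_le, exp_pos].
  apply Rmin_glb.
  - apply Rmult_le_reg_r with (E0 + eps * S0); [lra |].
    unfold Rdiv. rewrite Rmult_assoc, Rinv_l by lra. lra.
  - apply Rle_trans with (eps * S0 / E0).
    + unfold Rdiv. apply Rmult_le_compat_l; auto. apply Rinv_le_contravar; lra.
    + unfold S0, Rdiv. rewrite scal_sum, Rmult_comm, scal_sum.
      apply sum_Rle. intros j _.
      replace (exp (a * u (S j)) * eps * / E0)
        with (exp (a * u (S j) + - (a * a) + - (a * u 0%nat)))
        by (unfold eps, E0; rewrite !exp_plus, !exp_Ropp; field;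
            split; apply Rgt_not_eq, exp_pos).
      apply exp_le. nra.
Qed.

Definition clamp01_compl c (x : R) := 1 - clamp01 (x + - c).

Lemma clamp01_compl_bounds c x : 0 <= clamp01_compl c x <= 1.
Proof. unfold clamp01_compl. destruct (clamp01_bounds (x + - c)). lra. Qed.

Lemma bounded_lipschitz_clamp01_compl c : bounded_lipschitz (clamp01_compl c).
Proof.
  destruct (bounded_lipschitz_clamp01 (- c)) as [C [L [HC [HL [_ Hlip]]]]].
  exists 1, L. repeat split; try lra.
  - intros x. destruct (clamp01_compl_bounds c x). rewrite Rabs_pos_eq; lra.
  - intros x y. unfold clamp01_compl. rewrite <- Rabs_Ropp.
    replace (- (1 - clamp01 (x + - c) - (1 - clamp01 (y + - c))))
      with (clamp01 (x + - c) - clamp01 (y + - c)) by ring. apply Hlip.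
Qed.

Lemma prod_f_R0_one F n : (forall j, (j <= n)%nat -> F j = 1) -> prod_f_R0 F n = 1.
Proof.
  intros H. induction n as [| n IH]; simpl; [apply H; lia |].
  rewrite IH, H by (intros; try apply H; lia). ring.
Qed.

(* Either [U_1 >= t], or every [U_j <= c], or some [U_j > c] beats [U_1 < t]
   by a margin [a (c - t)] exceeding the penalty [a^2]. *)
Lemma softmax_first_le a n u t c : 0 < a ->
  softmax_first a n u <= clamp01 (u 0%nat + (1 - t)) + prod_coords (clamp01_compl c) n u
                         + exp (- (a * (c - t) - a * a)).
Proof.
  intros Ha. destruct (softmax_first_bounds a n u) as [F1 F2].
  assert (HP : 0 <= prod_coords (clamp01_compl c) n u)
    by (apply prod_SO_pos; intros; apply clamp01_compl_bounds).
  assert (HC := clamp01_bounds (u 0%nat + (1 - t))).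
  assert (HE := exp_pos (- (a * (c - t) - a * a))).
  destruct (Rle_dec t (u 0%nat)) as [Ht | Ht]; [rewrite clamp01_ge1 by lra; lra |].
  destruct (classic (forall j, (j <= n)%nat -> u (S j) <= c)) as [Hall | Hex].
  { assert (prod_coords (clamp01_compl c) n u = 1); [| lra].
    apply prod_f_R0_one. intros j Hj. unfold clamp01_compl.
    rewrite clamp01_le0; [ring | specialize (Hall j Hj); lra]. }
  apply not_all_ex_not in Hex. destruct Hex as [j Hj].
  apply imply_to_and in Hj. destruct Hj as [Hj Hc].
  enough (softmax_first a n u <= exp (- (a * (c - t) - a * a))) by lra.
  unfold softmax_first. set (E0 := exp (a * u 0%nat)). set (eps := exp (- (a * a))).
  set (S0 := sum_f_R0 (fun j => exp (a * u (S j))) n).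
  assert (HE0 : 0 < E0) by apply exp_pos. assert (He : 0 < eps) by apply exp_pos.
  assert (Hj0 : exp (a * u (S j)) <= S0)
    by (apply (sum_f_R0_ge_term (fun j => exp (a * u (S j)))); auto;
        intros; apply Rlt_le, exp_pos).
  assert (Hej := exp_pos (a * u (S j))).
  apply Rle_trans with (E0 / (eps * exp (a * u (S j)))).
  - unfold Rdiv. apply Rmult_le_compat_l; [lra |]. apply Rinv_le_contravar; nra.
  - replace (E0 / (eps * exp (a * u (S j)))) with (exp (a * u 0%nat + a * a + - (a * u (S j))))
      by (unfold eps, E0; rewrite !exp_plus, !exp_Ropp; field;
          split; apply Rgt_not_eq, exp_pos).
    apply exp_le. nra.
Qed.

Lemma gexp_softmax_first_ge_1 a n : 0 < a ->
  0 <= 1 - gexp (n + 2) (softmax_first a n).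
Proof.
  intros Ha. rewrite <- (gexp_const (n + 2) 1) at 1.
  enough (gexp (n + 2) (softmax_first a n) <= gexp (n + 2) (fun _ => 1)) by lra.
  apply gexp_le; auto using coordwise_lipschitz_softmax_first, coordwise_lipschitz_const.
  intros; apply softmax_first_bounds.
Qed.

Lemma gexp_softmax_first_nonneg a n : 0 < a -> 0 <= gexp (n + 2) (softmax_first a n).
Proof.
  intros Ha. rewrite <- (gexp_const (n + 2) 0).
  apply gexp_le; auto using coordwise_lipschitz_softmax_first, coordwise_lipschitz_const.
  intros; apply Rlt_le, softmax_first_bounds.
Qed.

Lemma one_minus_gexp_softmax_first_le a n d : 0 < a -> 0 <= d <= 1 ->
  1 - gexp (n + 2) (softmax_first a n)
  <= exp (- (d * a * (d * a)) / 2) + INR (S n) * exp (- ((1 - d) * a * ((1 - d) * a)) / 2).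
Proof.
  intros Ha Hd. assert (GF := coordwise_lipschitz_softmax_first a n Ha).
  set (psi x := exp_cap (- a * x + - (d * a * a))).
  set (phi x := exp_cap (a * x + - ((1 - d) * a * a))).
  assert (Gpsi : bounded_lipschitz psi) by apply bounded_lipschitz_exp_cap.
  assert (Gphi : bounded_lipschitz phi) by apply bounded_lipschitz_exp_cap.
  assert (Gsum : coordwise_lipschitz (fun u => sum_f_R0 (fun j => phi (u (S j))) n))
    by (apply (coordwise_lipschitz_sum n (fun j u => phi (u (S j))));
        intros; apply coordwise_lipschitz_coord, Gphi).
  rewrite <- gexp_one_minus by auto.
  eapply Rle_trans.
  { apply (gexp_le _ _ (fun u => psi (u 0%nat) + sum_f_R0 (fun j => phi (u (S j))) n)).
    - apply coordwise_lipschitz_minus; auto using coordwise_lipschitz_const.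
    - apply coordwise_lipschitz_plus; auto using coordwise_lipschitz_coord.
    - intros u. apply one_minus_softmax_first_le; auto. }
  rewrite gexp_plus by auto using coordwise_lipschitz_coord.
  rewrite (gexp_coord _ 0 psi), (gexp_sum _ n (fun j u => phi (u (S j))))
    by (auto using coordwise_lipschitz_coord; lia).
  rewrite (sum_eq _ (fun _ => gauss_mean phi)) by (intros; apply gexp_coord; auto; lia).
  rewrite sum_cte, Rmult_comm. apply Rplus_le_compat.
  - replace (- (d * a * (d * a)) / 2) with (- (d * a) * - (d * a) / 2 - - (d * a) * - (d * a))
      by field.
    apply gauss_mean_le_exp; auto. intros x. unfold psi.
    replace (- a * x + - (d * a * a)) with (a * - (x + d * a)) by ring.
    replace (- (d * a) * (x - - (d * a))) with (d * a * - (x + d * a)) by ring.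
    apply exp_cap_le_exp. nra.
  - apply Rmult_le_compat_l; [apply pos_INR |].
    replace (- ((1 - d) * a * ((1 - d) * a)) / 2)
      with ((1 - d) * a * ((1 - d) * a) / 2 - (1 - d) * a * ((1 - d) * a)) by field.
    apply gauss_mean_le_exp; auto. intros x. unfold phi.
    replace (a * x + - ((1 - d) * a * a)) with (a * (x - (1 - d) * a)) by ring.
    apply exp_cap_le_exp. nra.
Qed.

Lemma gauss_mean_clamp01_compl_bounds c : 0 <= c ->
  0 <= gauss_mean (clamp01_compl c) <= 1 - gauss_density (c + 2).
Proof.
  intros Hc. split.
  - rewrite <- (gauss_mean_const 0).
    apply gauss_mean_le; auto using bounded_lipschitz_const, bounded_lipschitz_clamp01_compl.
    intros; apply clamp01_compl_bounds.
  - rewrite (gauss_mean_ext _ (fun x => 1 + -1 * clamp01 (x + - c)))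
      by (intros; unfold clamp01_compl; ring).
    rewrite gauss_mean_plus, gauss_mean_const, gauss_mean_scal by
      auto using bounded_lipschitz_const, bounded_lipschitz_scal, bounded_lipschitz_clamp01.
    enough (gauss_density (c + 1 + 1) <= gauss_mean (fun x => clamp01 (x + - c)))
      by (replace (c + 2) with (c + 1 + 1) by ring; lra).
    apply gauss_mean_ge_density; auto using bounded_lipschitz_clamp01; [lra | |].
    + intros; apply clamp01_bounds.
    + intros x Hx. rewrite clamp01_ge1; lra.
Qed.

Lemma exp_pow_INR x k : exp x ^ k = exp (x * INR k).
Proof.
  induction k as [| k IH]; [simpl; rewrite Rmult_0_r, exp_0; auto |].
  rewrite S_INR. simpl. rewrite IH, <- exp_plus. f_equal. ring.
Qed.

Lemma gexp_softmax_first_le a n t c : 0 < a -> 1 <= t -> 0 <= c ->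
  gexp (n + 2) (softmax_first a n)
  <= exp (- ((t - 1) * (t - 1)) / 2) + exp (- (gauss_density (c + 2) * INR (S n)))
     + exp (- (a * (c - t) - a * a)).
Proof.
  intros Ha Ht Hc. assert (GF := coordwise_lipschitz_softmax_first a n Ha).
  set (psi x := clamp01 (x + (1 - t))).
  assert (Gpsi : bounded_lipschitz psi) by apply bounded_lipschitz_clamp01.
  assert (GP : coordwise_lipschitz (prod_coords (clamp01_compl c) n))
    by apply coordwise_lipschitz_prod_coords, bounded_lipschitz_clamp01_compl.
  eapply Rle_trans.
  { apply (gexp_le _ _ (fun u => (psi (u 0%nat) + prod_coords (clamp01_compl c) n u)
                                  + exp (- (a * (c - t) - a * a)))); auto.
    - apply coordwise_lipschitz_plus;
        auto using coordwise_lipschitz_plus, coordwise_lipschitz_coord, coordwise_lipschitz_const.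
    - intros u. apply softmax_first_le; auto. }
  rewrite gexp_plus, gexp_plus, gexp_const
    by auto using coordwise_lipschitz_plus, coordwise_lipschitz_coord, coordwise_lipschitz_const.
  rewrite (gexp_coord _ 0 psi) by (auto; lia).
  replace (n + 2)%nat with (S (S n)) by lia.
  rewrite gexp_prod_coords by apply bounded_lipschitz_clamp01_compl.
  apply Rplus_le_compat_r, Rplus_le_compat.
  - replace (- ((t - 1) * (t - 1)) / 2) with ((t - 1) * (t - 1) / 2 - (t - 1) * (t - 1))
      by field.
    apply gauss_mean_le_exp; auto. intros x. unfold psi.
    destruct (Rle_dec (x + (1 - t)) 0).
    + rewrite clamp01_le0 by auto. apply Rlt_le, exp_pos.
    + apply Rle_trans with 1; [apply clamp01_bounds | apply exp_ge_1; nra].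
  - (* [(1 - p)^(n+1) <= exp (- p (n + 1))] *)
    destruct (gauss_mean_clamp01_compl_bounds c Hc) as [B1 B2].
    set (p := gauss_density (c + 2)) in *.
    rewrite Ropp_mult_distr_l, <- exp_pow_INR.
    apply pow_incr. split; auto. assert (H := exp_ineq1_le (- p)). lra.
Qed.

(** * Asymptotics in [M = n + 2] *)

Definition log_M (n : nat) := ln (INR (n + 2)).

Lemma INR_add_2 n : INR (n + 2) = INR n + 2.
Proof. rewrite plus_INR. simpl. ring. Qed.

Lemma log_M_pos n : 0 < log_M n.
Proof.
  unfold log_M. rewrite <- ln_1. apply ln_increasing; [lra |].
  rewrite INR_add_2. assert (H := pos_INR n). lra.
Qed.

Lemma exp_log_M n : exp (log_M n) = INR n + 2.
Proof.
  unfold log_M. rewrite exp_ln, INR_add_2; auto.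
  rewrite INR_add_2. assert (H := pos_INR n). lra.
Qed.

Lemma cv_infty_log_M : cv_infty log_M.
Proof.
  intros B. destruct (cv_infty_INR (exp B)) as [N HN]. exists N. intros n Hn.
  specialize (HN n Hn). apply exp_lt_inv. rewrite exp_log_M. lra.
Qed.

Lemma cv_exp_opp_log_M al : 0 < al -> Un_cv (fun n => exp (- (al * log_M n))) 0.
Proof.
  intros Ha. apply cv_exp_opp, (cv_infty_le (fun n => al * log_M n + 0)).
  - apply cv_infty_affine; auto using cv_infty_log_M.
  - exists 0%nat. intros; lra.
Qed.

Lemma inv_sqrt_tauM Rate q n : 0 < Rate -> 0 < q ->
  0 < tauM Rate q (n + 2) /\
  0 < / sqrt (tauM Rate q (n + 2)) /\
  / sqrt (tauM Rate q (n + 2)) * / sqrt (tauM Rate q (n + 2)) = q / Rate * log_M n.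
Proof.
  intros HR Hq. assert (HL := log_M_pos n).
  assert (Ht : 0 < tauM Rate q (n + 2))
    by (unfold tauM; fold (log_M n); apply Rdiv_lt_0_compat; nra).
  assert (Hs := sqrt_lt_R0 _ Ht).
  split; [| split]; auto; [apply Rinv_0_lt_compat; auto |].
  rewrite <- Rinv_mult, sqrt_sqrt by lra. unfold tauM. fold (log_M n). field. lra.
Qed.

Lemma calE_eq Rate q n : 0 < Rate -> 0 < q ->
  calE (n + 2) (tauM Rate q (n + 2))
  = gexp (n + 2) (softmax_first (/ sqrt (tauM Rate q (n + 2))) n).
Proof.
  intros HR Hq. unfold calE. rewrite sparc_integrand_eq; auto. apply inv_sqrt_tauM; auto.
Qed.

Theorem calE_cv_1 Rate q : 0 < Rate -> 0 < q -> q > 2 * Rate ->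
  Un_cv (fun n : nat => calE (n + 2) (tauM Rate q (n + 2))) 1.
Proof.
  intros HR Hq Hk. set (k := q / Rate).
  assert (Hk2 : 2 < k) by (unfold k; apply Rmult_lt_reg_r with Rate; auto;
                          unfold Rdiv; rewrite Rmult_assoc, Rinv_l; lra).
  (* split the penalty [a^2] as [d a^2] against [U_1] and [(1 - d) a^2] against the rest *)
  set (d := (k - 2) / (4 * k)).
  assert (Hd0 : 0 < d) by (unfold d; apply Rdiv_lt_0_compat; lra).
  assert (Hd1 : d <= 1) by (unfold d; apply Rmult_le_reg_r with (4 * k); [lra |];
                            unfold Rdiv; rewrite Rmult_assoc, Rinv_l; lra).
  assert (Hdk : d * k = (k - 2) / 4) by (unfold d; field; lra).
  intros eps Heps.
  assert (Hlim : Un_cv (fun n => exp (- (d * d * k / 2 * log_M n))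
                                  + exp (- ((k - 2) / 4 * log_M n))) 0).
  { rewrite <- (Rplus_0_r 0). apply CV_plus; apply cv_exp_opp_log_M; [nra | lra]. }
  destruct (Hlim eps Heps) as [N HN]. exists N. intros n Hn. specialize (HN n Hn).
  unfold Rdist in *. rewrite Rminus_0_r in HN.
  destruct (inv_sqrt_tauM Rate q n HR Hq) as [_ [Ha Ha2]]. fold k in Ha2.
  rewrite calE_eq by auto. set (a := / sqrt (tauM Rate q (n + 2))) in *.
  assert (B1 := gexp_softmax_first_ge_1 a n Ha).
  assert (B2 := one_minus_gexp_softmax_first_le a n d Ha ltac:(lra)).
  assert (HL := log_M_pos n).
  replace (- (d * a * (d * a)) / 2) with (- (d * d * k / 2 * log_M n)) in B2
    by (replace (d * a * (d * a)) with (d * d * (a * a)) by ring; rewrite Ha2; field).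
  assert (INR (S n) * exp (- ((1 - d) * a * ((1 - d) * a)) / 2)
          <= exp (- ((k - 2) / 4 * log_M n))).
  { apply Rle_trans with (exp (log_M n) * exp (- ((1 - d) * a * ((1 - d) * a)) / 2)).
    - apply Rmult_le_compat_r; [apply Rlt_le, exp_pos |]. rewrite exp_log_M, S_INR. lra.
    - rewrite <- exp_plus. apply exp_le.
      replace ((1 - d) * a * ((1 - d) * a)) with ((1 - d) * (1 - d) * (a * a)) by ring.
      rewrite Ha2. assert ((1 - d) * (1 - d) * k / 2 >= 1 + (k - 2) / 4) by nra. nra. }
  rewrite Rabs_pos_eq in HN by (apply Rplus_le_le_0_compat; apply Rlt_le, exp_pos).
  rewrite Rabs_left1 by lra. lra.
Qed.

Lemma cv_exp_opp_sqr_pred (s : nat -> R) al : 0 < al ->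
  (forall n, s n * s n = al * log_M n) -> Un_cv (fun n => exp (- ((s n - 1) * (s n - 1)) / 2)) 0.
Proof.
  intros Hal Hs. apply (Un_cv_ext (fun n => exp (- ((s n - 1) * (s n - 1) / 2))));
    [intros; f_equal; field |].
  apply cv_exp_opp, (cv_infty_le (fun n => al / 4 * log_M n + - (1 / 2))).
  - apply cv_infty_affine; [apply cv_infty_log_M | lra].
  - exists 0%nat. intros n _. assert (H := Rle_0_sqr (s n - 2)). unfold Rsqr in H.
    specialize (Hs n). nra.
Qed.

Lemma ge_1_eventually (s : nat -> R) al : 0 < al -> (forall n, 0 <= s n) ->
  (forall n, s n * s n = al * log_M n) -> exists N, forall n, (N <= n)%nat -> 1 <= s n.
Proof.
  intros Hal Hs0 Hs. destruct (cv_infty_log_M (1 / al)) as [N HN]. exists N. intros n Hn.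
  specialize (HN n Hn). specialize (Hs0 n). specialize (Hs n).
  assert (Hinv : al * (1 / al) = 1) by (field; lra).
  assert (1 <= s n * s n) by nra. nra.
Qed.

(* [M] times the density at [c + 2] is at least [M^(1/2 - beta/4)] up to a constant. *)
Lemma cv_exp_opp_gauss_count (c : nat -> R) beta : 0 < beta < 2 ->
  (forall n, c n * c n <= beta * log_M n) ->
  Un_cv (fun n => exp (- (gauss_density (c n + 2) * INR (S n)))) 0.
Proof.
  intros Hb Hc. set (ze := (2 - beta) / (2 * beta)).
  assert (Hze : 0 < ze) by (unfold ze; apply Rdiv_lt_0_compat; lra).
  assert (Hzb : (1 + ze) * beta = beta / 2 + 1) by (unfold ze; field; lra).
  set (K0 := 2 * (1 + 1 / ze)). set (g := (2 - beta) / 4).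
  assert (Hg : 0 < g) by (unfold g; lra).
  set (K1 := exp (- K0) / (2 * sqrt (2 * PI))). assert (H2PI := sqrt_2PI_pos).
  assert (HK1 : 0 < K1) by (apply Rdiv_lt_0_compat; [apply exp_pos | lra]).
  apply cv_exp_opp, (cv_infty_le (fun n => K1 * g * log_M n + K1)).
  { apply cv_infty_affine; [apply cv_infty_log_M | nra]. }
  exists 0%nat. intros n _. specialize (Hc n). set (x := c n) in *.
  assert (HL := log_M_pos n).
  assert (Hsq : (x + 2) * (x + 2) <= (1 + ze) * (x * x) + 4 * (1 + 1 / ze)).
  { assert (H : 0 <= ze * ((x - 2 / ze) * (x - 2 / ze)))
      by (apply Rmult_le_pos; [lra | apply Rle_0_sqr]).
    replace (ze * ((x - 2 / ze) * (x - 2 / ze))) with (ze * (x * x) - 4 * x + 4 / ze) in H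
      by (field; lra).
    replace (4 * (1 + 1 / ze)) with (4 + 4 / ze) by (field; lra). nra. }
  assert (Hexp : exp (- ((beta / 4 + 1 / 2) * log_M n) - K0) <= exp (- (x + 2) ^ 2 / 2)).
  { apply exp_le. unfold K0. simpl. nra. }
  assert (HS : exp (log_M n) / 2 <= INR (S n))
    by (rewrite exp_log_M, S_INR; assert (H := pos_INR n); lra).
  apply Rle_trans with (K1 * exp (g * log_M n)).
  - assert (H := exp_ineq1_le (g * log_M n)). nra.
  - replace (K1 * exp (g * log_M n))
      with (exp (- ((beta / 4 + 1 / 2) * log_M n) - K0) / sqrt (2 * PI) * (exp (log_M n) / 2)).
    2:{ unfold K1. replace (g * log_M n) with (- ((beta / 4 + 1 / 2) * log_M n) - K0 + log_M n + K0)
          by (unfold g; field).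
        rewrite !exp_plus, exp_Ropp. field. split; [apply Rgt_not_eq, exp_pos | lra]. }
    unfold gauss_density. apply Rmult_le_compat; try lra.
    + apply Rlt_le, Rdiv_lt_0_compat; [apply exp_pos | lra].
    + assert (H := exp_pos (log_M n)). lra.
    + unfold Rdiv. apply Rmult_le_compat_r; [apply Rlt_le, Rinv_0_lt_compat |]; lra.
Qed.

Theorem calE_cv_0 Rate q : 0 < Rate -> 0 < q -> q < 2 * Rate ->
  Un_cv (fun n : nat => calE (n + 2) (tauM Rate q (n + 2))) 0.
Proof.
  intros HR Hq Hk. set (k := q / Rate).
  assert (Hk2 : k < 2) by (unfold k; apply Rmult_lt_reg_r with Rate; auto;
                          unfold Rdiv; rewrite Rmult_assoc, Rinv_l; lra).
  assert (Hk0 : 0 < k) by (unfold k; apply Rdiv_lt_0_compat; auto).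
  (* thresholds [t = ep a] for [U_1] and [c = gam a] for the others, with
     [c^2 = (k + 2)/2 log M < 2 log M] and [c - t > a] *)
  set (gam := sqrt ((k + 2) / (2 * k))).
  assert (Hg2 : gam * gam = (k + 2) / (2 * k)) by (apply sqrt_sqrt, Rlt_le, Rdiv_lt_0_compat; lra).
  assert (Hg1 : 1 < gam).
  { assert ((k + 2) / (2 * k) > 1) by (apply Rmult_lt_reg_r with (2 * k); [lra |];
      unfold Rdiv; rewrite Rmult_assoc, Rinv_l; lra).
    assert (0 <= gam) by apply sqrt_pos. nra. }
  set (ep := (gam - 1) / 2). assert (Hep : 0 < ep) by (unfold ep; lra).
  set (A n := / sqrt (tauM Rate q (n + 2))).
  assert (HA : forall n, 0 < A n /\ A n * A n = k * log_M n)
    by (intros n; destruct (inv_sqrt_tauM Rate q n HR Hq) as [_ H]; exact H).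
  apply cv_of_abs_le with (v := fun n => exp (- ((ep * A n - 1) * (ep * A n - 1)) / 2)
       + exp (- (gauss_density (gam * A n + 2) * INR (S n)))
       + exp (- (A n * (gam * A n - ep * A n) - A n * A n))).
  - destruct (ge_1_eventually (fun n => ep * A n) (ep * ep * k)) as [N HN].
    + apply Rmult_lt_0_compat; nra.
    + intros n. destruct (HA n) as [Ha _]. nra.
    + intros n. destruct (HA n) as [_ Ha2].
      replace (ep * A n * (ep * A n)) with (ep * ep * (A n * A n)) by ring. rewrite Ha2. ring.
    + exists N. intros n Hn. specialize (HN n Hn). destruct (HA n) as [Ha Ha2].
      rewrite calE_eq by auto. fold (A n).
      rewrite Rabs_pos_eq by apply gexp_softmax_first_nonneg, Ha.
      apply gexp_softmax_first_le; nra.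
  - rewrite <- (Rplus_0_r 0), <- (Rplus_0_r 0) at 1. repeat apply CV_plus.
    + apply (cv_exp_opp_sqr_pred (fun n => ep * A n) (ep * ep * k));
        [apply Rmult_lt_0_compat; nra |].
      intros n. destruct (HA n) as [_ Ha2].
      replace (ep * A n * (ep * A n)) with (ep * ep * (A n * A n)) by ring.
      rewrite Ha2. ring.
    + apply (cv_exp_opp_gauss_count _ ((k + 2) / 2)); [lra |].
      intros n. destruct (HA n) as [_ Ha2].
      replace (gam * A n * (gam * A n)) with (gam * gam * (A n * A n)) by ring.
      rewrite Hg2, Ha2. right. field. lra.
    + apply (Un_cv_ext (fun n => exp (- ((gam - ep - 1) * k * log_M n)))).
      * intros n. destruct (HA n) as [_ Ha2]. f_equal. f_equal.
        replace (A n * (gam * A n - ep * A n) - A n * A n) with ((gam - ep - 1) * (A n * A n))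
          by ring. rewrite Ha2. ring.
      * apply cv_exp_opp_log_M. unfold ep. nra.
Qed.

Theorem mainTheorem7 (Rate q : R) (hR : 0 < Rate) (hq : 0 < q) :
  (q > 2 * Rate ->
     Un_cv (fun n : nat => calE (n + 2) (tauM Rate q (n + 2))) 1) /\
  (q < 2 * Rate ->
     Un_cv (fun n : nat => calE (n + 2) (tauM Rate q (n + 2))) 0).
Proof. split; intros; [apply calE_cv_1 | apply calE_cv_0]; auto. Qed.
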